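(* Assume the setting below and let $\lambda>0$ with $\mu_+(\max\{\lambda,1\})\le1$. Assume (A1), (A4), (A5), (A6). If $r$ is a regular equilibrium solution with $r(1)=\lambda$, then $$\alpha_0(\rho,r(\rho))\,\tau(\rho)\le r'(\rho)\le\alpha_1(\rho,r(\rho))\,\tau(\rho)\qquad\text{for all }\rho\in(0,1].$$
   Context: Setting: $n\ge2$; $\kappa$ continuous on $[0,\infty)$, $\kappa_\pm=\max\{\pm\kappa,0\}$, $\mu_\pm(\lambda)=\int_0^\lambda s\kappa_\pm(s)ds$; $f$ solves $f''+\kappa f=0$, $f(0)=0$, $f'(0)=1$. Let $\phi,h:(0,\infty)\to\mathbb R$ and $\Phi(v_1,\dots,v_n)=\sum_{i=1}^n\phi(v_i)+h(v_1\cdots v_n)$. For a function $r$ on $(0,1]$ put $\tau(\rho)=f(r(\rho))/f(\rho)$. An equilibrium solution with $r(1)=\lambda$ is $r\in C^1(0,1]$, twice differentiable on $(0,1)$, with $r'>0$ on $(0,1]$, $r(0):=\lim_{\rho\to0^+}r(\rho)\ge0$, $r(1)=\lambda$, and for $\rho\in(0,1)$ $$f(\rho)\big[\phi''(r')+h''(r'\tau^{n-1})\tau^{2(n-1)}\big]r''=(n-1)\big[f'(r)\phi'(\tau)-f'(\rho)\phi'(r')\big]-(n-1)\big(f'(r)r'-f'(\rho)\tau\big)h''(r'\tau^{n-1})\,r'\tau^{2n-3}$$ (with $r=r(\rho)$, $r'=r'(\rho)$, $\tau=\tau(\rho)$). It is regular if $r(0)=0$. Assumptions: (A1) $h$ is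 $C^2$ and strictly convex. (A4) $\phi:(0,\infty)\to(0,\infty)$ is $C^2$ and convex. (A5) $v\mapsto v\phi'(v)$ is increasing. (A6) there is $t_0\ge0$ with $\phi'(t_0)=0$; with $q_1(s)=\sup_{v>t_0}\phi'(v)/\phi'(sv)$ for $s\ge1$ and $q_0(s)=\inf_{v>t_0/s}\phi'(v)/\phi'(sv)$ for $s\in(0,1]$, one has $q_1\in C^1[1,\infty)$, $q_0\in C^1(0,1]$, $\lim_{s\to\infty}q_1(s)=0$, $\lim_{s\to0^+}q_0(s)=\infty$, $q_1'<0$ on $[1,\infty)$ and $q_0'<0$ on $(0,1]$ (so $q_1(1)=q_0(1)=1$ and $q_1^{-1}:(0,1]\to[1,\infty)$, $q_0^{-1}:[1,\infty)\to(0,1]$ exist). Notation: $b_0(\rho)=\min_{0\le s\le\rho}f'(s)$, $b_1(\rho)=\max_{0\le s\le\rho}f'(s)$; $\alpha_1(\rho,s)=\max\{b_1(\rho)/b_0(s),\,q_1^{-1}(b_0(\rho)/b_1(s))\}$ and $\alpha_0(\rho,s)=\min\{b_0(\rho)/b_1(s),\,q_0^{-1}(b_1(\rho)/b_0(s))\}$ for $(\rho,s)\in[0,1]\times[0,\lambda]$. *)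

From Stdlib Require Import Reals Lra ClassicalEpsilon.
Open Scope R_scope.

Definition is_min_on (g : R -> R) (a b m : R) : Prop :=
  (exists s, a <= s <= b /\ g s = m) /\ (forall s, a <= s <= b -> m <= g s).
Definition is_max_on (g : R -> R) (a b m : R) : Prop :=
  (exists s, a <= s <= b /\ g s = m) /\ (forall s, a <= s <= b -> g s <= m).

Definition is_glb (E : R -> Prop) (m : R) : Prop :=
  (forall y, E y -> m <= y) /\ (forall b, (forall y, E y -> b <= y) -> b <= m).

Definition b0 (df : R -> R) (rho : R) : R :=
  epsilon (inhabits 0) (fun m => is_min_on df 0 rho m).
Definition b1 (df : R -> R) (rho : R) : R :=
  epsilon (inhabits 0) (fun m => is_max_on df 0 rho m).

(* alpha_1(rho,s), alpha_0(rho,s); q1inv, q0inv are the inverse functions of q_1, q_0 *)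
Definition alpha1 (df q1inv : R -> R) (rho s : R) : R :=
  Rmax (b1 df rho / b0 df s) (q1inv (b0 df rho / b1 df s)).
Definition alpha0 (df q0inv : R -> R) (rho s : R) : R :=
  Rmin (b0 df rho / b1 df s) (q0inv (b1 df rho / b0 df s)).

Definition convex_pos (g : R -> R) : Prop :=
  forall x y t, 0 < x -> 0 < y -> 0 <= t <= 1 ->
    g (t * x + (1 - t) * y) <= t * g x + (1 - t) * g y.
Definition strictly_convex_pos (g : R -> R) : Prop :=
  forall x y t, 0 < x -> 0 < y -> x <> y -> 0 < t < 1 ->
    g (t * x + (1 - t) * y) < t * g x + (1 - t) * g y.

(* Put tau = f(r)/f and s = r'/tau; the claim is alpha0 <= s(rho0) <= alpha1 at every
   rho0 in (0,1].  The proof has three ingredients.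
   1. Jacobi field.  With M = max{lambda,1}, the bound mu_+(M) <= 1 forces f' > 0 on [0,M]:
      up to the first zero x1 of f', the quantity f' + m mu_+ (m = max f') is nondecreasing,
      which is incompatible with f'(x1) <= 0.  Hence f > 0, 0 < b0 <= 1 <= b1, and
      b0(x) z <= f(z) <= b1(x) z for 0 < z <= x <= M.
   2. Sign of r''.  Convexity gives phi'' >= 0 and h'' >= 0, so the equilibrium equation
      decides the sign of r'' from the signs of E = f'(r) s - f' and
      D = f'(r) phi'(tau) - f' phi'(s tau); (A5), (A6) and the decreasing functions q1, q0
      bracket D once s leaves [alpha0, alpha1].
   3. Trapping.  If s(rho0) > alpha1, then s > alpha1 near rho0; there r'' < 0 and s' < 0,
      so s stays above s(y) > alpha1 on (0,y].  Thus r' >= r'(y), tau is bounded below and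
      tau' >= K/rho, which forces tau -> -oo as rho -> 0: a contradiction.  The case
      s(rho0) < alpha0 is symmetric (tau decreasing, bounded above, tau' <= -K/rho).
   The file develops, in order: calculus on closed intervals with one-sided endpoint
   regularity (mean value theorem, barrier principle, logarithmic blow-up); convexity;
   (A5)/(A6) and the monotonicity of q1, q0; the positive curvature mass and the Jacobi
   field; elementary properties of r; and the equilibrium argument, from which
   [theorem4p2] follows. *)

From Stdlib Require Import Reals Lra Lia Classical ClassicalEpsilon.
From Coquelicot Require Coquelicot.
Open Scope R_scope.

Definition cont_in (g : R -> R) (a b : R) : Prop :=
  forall x, a <= x <= b -> forall eps, 0 < eps ->
    exists d, 0 < d /\ forall y, a <= y <= b -> Rabs (y - x) < d -> Rabs (g y - g x) < eps.

Lemma continuity_pt_near g x eps : continuity_pt g x -> 0 < eps ->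
  exists d, 0 < d /\ forall y, Rabs (y - x) < d -> Rabs (g y - g x) < eps.
Proof.
  intros H He. destruct (H eps He) as [d [Hd Hy]]. exists d; split; [lra|].
  intros y Hyx. destruct (Req_dec y x) as [->|Hne].
  - rewrite Rminus_diag, Rabs_R0; lra.
  - apply (Hy y). split; [split; [exact I|auto]|exact Hyx].
Qed.

Lemma derivable_cont_in g dg a b :
  (forall x, a <= x <= b -> derivable_pt_lim g x (dg x)) -> cont_in g a b.
Proof.
  intros H x Hx eps He.
  assert (Hc : continuity_pt g x) by (apply derivable_continuous_pt; exists (dg x); apply H; exact Hx).
  destruct (continuity_pt_near g x eps Hc He) as [d [Hd Hy]]. exists d; split; auto.
Qed.

Lemma cont_in_sub g a b a' b' : cont_in g a b -> a <= a' -> b' <= b -> cont_in g a' b'.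
Proof.
  intros H Ha Hb x Hx eps He. destruct (H x ltac:(lra) eps He) as [d [Hd Hy]].
  exists d; split; auto. intros y Hy'. apply Hy. lra.
Qed.

Lemma cont_in_plus g h a b : cont_in g a b -> cont_in h a b -> cont_in (fun x => g x + h x) a b.
Proof.
  intros Hg Hh x Hx eps He.
  destruct (Hg x Hx (eps/2) ltac:(lra)) as [d1 [Hd1 H1]].
  destruct (Hh x Hx (eps/2) ltac:(lra)) as [d2 [Hd2 H2]].
  exists (Rmin d1 d2). split; [apply Rmin_pos; auto|].
  intros y Hy Hyd.
  assert (Hyd1 : Rabs (y - x) < d1) by (eapply Rlt_le_trans; [exact Hyd|apply Rmin_l]).
  assert (Hyd2 : Rabs (y - x) < d2) by (eapply Rlt_le_trans; [exact Hyd|apply Rmin_r]).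
  specialize (H1 y Hy Hyd1). specialize (H2 y Hy Hyd2).
  unfold Rabs in *; repeat destruct Rcase_abs; lra.
Qed.

Lemma cont_in_right_limit g dg a b :
  (forall x, a < x <= b -> derivable_pt_lim g x (dg x)) ->
  limit1_in g (fun y => a < y <= b) (g a) a -> cont_in g a b.
Proof.
  intros Hd Hl x Hx eps He. destruct (Req_dec x a) as [->|Hne].
  - destruct (Hl eps He) as [d [Hd' Hy]]. exists d; split; auto.
    intros y Hy' Hyd. destruct (Req_dec y a) as [->|Hya].
    + rewrite Rminus_diag, Rabs_R0; lra.
    + apply (Hy y). split; [lra|exact Hyd].
  - assert (Hc : continuity_pt g x)
      by (apply derivable_continuous_pt; exists (dg x); apply Hd; lra).
    destruct (continuity_pt_near g x eps Hc He) as [d [Hd' Hy]]. exists d; split; auto.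
Qed.

Lemma cont_in_left_limit g dg a b :
  (forall x, a <= x < b -> derivable_pt_lim g x (dg x)) ->
  limit1_in g (fun y => a <= y < b) (g b) b -> cont_in g a b.
Proof.
  intros Hd Hl x Hx eps He. destruct (Req_dec x b) as [->|Hne].
  - destruct (Hl eps He) as [d [Hd' Hy]]. exists d; split; auto.
    intros y Hy' Hyd. destruct (Req_dec y b) as [->|Hyb].
    + rewrite Rminus_diag, Rabs_R0; lra.
    + apply (Hy y). split; [lra|exact Hyd].
  - assert (Hc : continuity_pt g x)
      by (apply derivable_continuous_pt; exists (dg x); apply Hd; lra).
    destruct (continuity_pt_near g x eps Hc He) as [d [Hd' Hy]]. exists d; split; auto.
Qed.

Lemma limit_at g D l x0 eps : limit1_in g D l x0 -> 0 < eps ->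
  exists a, 0 < a /\ forall u, D u -> Rabs (u - x0) < a -> Rabs (g u - l) < eps.
Proof.
  intros H He. destruct (H eps He) as [a [Ha Hu]]. exists a; split; auto.
  intros u Du Hd. apply (Hu u). split; auto.
Qed.

Lemma quotient_limit_continuous g D p l : (forall x, D x -> x <> p) ->
  limit1_in (fun x => (g x - g p) / (x - p)) D l p -> limit1_in g D (g p) p.
Proof.
  intros Hp Hq.
  assert (Hid := limit_minus _ _ D _ _ p (lim_x D p) (limit_free (fun _ => p) D p p)).
  assert (H := limit_plus _ _ D _ _ p (limit_mul _ _ D _ _ p Hq Hid) (limit_free (fun _ => g p) D p p)).
  rewrite Rminus_diag, Rmult_0_r, Rplus_0_l in H.
  intros eps He. destruct (H eps He) as [d [Hd Hu]]. exists d; split; auto.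
  intros x [Dx Hx]. specialize (Hu x (conj Dx Hx)). simpl in *.
  replace ((g x - g p) / (x - p) * (x - p) + g p) with (g x) in Hu; auto.
  field. apply Rminus_eq_contra, Hp, Dx.
Qed.

(** Projection onto [[a,b]]; composing with it turns continuity on [[a,b]] into
    continuity on the whole line, so the two-sided theorems of the library apply. *)
Definition clamp (a b x : R) := Rmax a (Rmin b x).

Lemma clamp_id a b x : a <= x <= b -> clamp a b x = x.
Proof. intros. unfold clamp. rewrite Rmin_right by lra. rewrite Rmax_right; lra. Qed.

Lemma cont_in_clamp g a b x : a <= b -> cont_in g a b -> a <= x <= b ->
  continuity_pt (fun y => g (clamp a b y)) x.
Proof.
  intros Hab H Hx eps He. destruct (H x Hx eps He) as [d [Hd Hy]].
  assert (Hbd : forall y, a <= clamp a b y <= b)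
    by (intros y; unfold clamp, Rmax, Rmin; repeat destruct Rle_dec; lra).
  assert (Hlip : forall y, Rabs (clamp a b y - clamp a b x) <= Rabs (y - x))
    by (intros y; unfold clamp, Rmax, Rmin; repeat destruct Rle_dec;
        unfold Rabs; repeat destruct Rcase_abs; lra).
  exists d. split; [lra|]. intros y [_ Hyd]. simpl in *. unfold R_dist in *.
  rewrite (clamp_id a b x Hx). apply Hy; [apply Hbd|].
  specialize (Hlip y). rewrite (clamp_id a b x Hx) in Hlip. lra.
Qed.

Lemma derivable_pt_lim_local (g h : R -> R) x l d : 0 < d ->
  (forall y, Rabs (y - x) < d -> g y = h y) -> derivable_pt_lim g x l -> derivable_pt_lim h x l.
Proof.
  intros Hd Heq H eps He. destruct (H eps He) as [del Hdel].
  assert (Hm : 0 < Rmin del d) by (apply Rmin_pos; [apply cond_pos|lra]).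
  exists (mkposreal _ Hm). intros hh Hh Hhd. simpl in Hhd.
  rewrite <- !Heq.
  - apply Hdel; auto. eapply Rlt_le_trans; [exact Hhd|apply Rmin_l].
  - rewrite Rminus_diag, Rabs_R0; lra.
  - replace (x + hh - x) with hh by ring. eapply Rlt_le_trans; [exact Hhd|apply Rmin_r].
Qed.

Lemma MVT_in g dg a b : a < b -> cont_in g a b ->
  (forall x, a < x < b -> derivable_pt_lim g x (dg x)) ->
  exists c, a < c < b /\ g b - g a = dg c * (b - a).
Proof.
  intros Hab Hc Hd.
  set (gc := fun y => g (clamp a b y)).
  assert (Hdc : forall x, a < x < b -> derivable_pt_lim gc x (dg x)).
  { intros x Hx. apply (derivable_pt_lim_local g gc x _ (Rmin (x - a) (b - x))).
    - apply Rmin_pos; lra.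
    - intros y Hy. unfold gc. rewrite clamp_id; auto.
      assert (Rabs (y - x) < x - a) by (eapply Rlt_le_trans; [exact Hy|apply Rmin_l]).
      assert (Rabs (y - x) < b - x) by (eapply Rlt_le_trans; [exact Hy|apply Rmin_r]).
      unfold Rabs in *; destruct Rcase_abs; lra.
    - apply Hd; auto. }
  assert (pr1 : forall c, a < c < b -> derivable_pt gc c)
    by (intros c Hc'; exists (dg c); apply Hdc; auto).
  assert (pr2 : forall c, a < c < b -> derivable_pt id c)
    by (intros c _; apply derivable_pt_id).
  destruct (MVT gc id a b pr1 pr2 Hab) as [c [P Hc']].
  - intros c Hc'. apply cont_in_clamp; auto; lra.
  - intros c _. apply derivable_continuous_pt, derivable_pt_id.
  - exists c. split; auto. rewrite (derive_pt_eq_0 _ _ _ (pr1 c P) (Hdc c P)) in Hc'.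
    rewrite (derive_pt_eq_0 _ _ _ (pr2 c P) (derivable_pt_lim_id c)) in Hc'.
    unfold gc, id in Hc'. rewrite !clamp_id in Hc' by lra. lra.
Qed.

Lemma nondecreasing_of_deriv g dg a b : a <= b -> cont_in g a b ->
  (forall x, a < x < b -> derivable_pt_lim g x (dg x)) ->
  (forall x, a < x < b -> 0 <= dg x) -> g a <= g b.
Proof.
  intros Hab Hc Hd Hp. destruct (Req_dec a b) as [->|Hne]; [lra|].
  destruct (MVT_in g dg a b) as [c [Hc' He]]; auto; try lra.
  specialize (Hp c Hc'). nra.
Qed.

Lemma nonincreasing_of_deriv g dg a b : a <= b -> cont_in g a b ->
  (forall x, a < x < b -> derivable_pt_lim g x (dg x)) ->
  (forall x, a < x < b -> dg x <= 0) -> g b <= g a.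
Proof.
  intros Hab Hc Hd Hp. destruct (Req_dec a b) as [->|Hne]; [lra|].
  destruct (MVT_in g dg a b) as [c [Hc' He]]; auto; try lra.
  specialize (Hp c Hc'). nra.
Qed.

Lemma increasing_of_deriv g dg a b : a < b -> cont_in g a b ->
  (forall x, a < x < b -> derivable_pt_lim g x (dg x)) ->
  (forall x, a < x < b -> 0 < dg x) -> g a < g b.
Proof.
  intros Hab Hc Hd Hp.
  destruct (MVT_in g dg a b) as [c [Hc' He]]; auto.
  specialize (Hp c Hc'). nra.
Qed.

Lemma decreasing_of_deriv g dg a b : a < b -> cont_in g a b ->
  (forall x, a < x < b -> derivable_pt_lim g x (dg x)) ->
  (forall x, a < x < b -> dg x < 0) -> g b < g a.
Proof.
  intros Hab Hc Hd Hp.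
  destruct (MVT_in g dg a b) as [c [Hc' He]]; auto.
  specialize (Hp c Hc'). nra.
Qed.

Lemma max_attained g a b : a <= b -> cont_in g a b ->
  exists t, a <= t <= b /\ forall y, a <= y <= b -> g y <= g t.
Proof.
  intros Hab Hc.
  destruct (continuity_ab_maj (fun y => g (clamp a b y)) a b Hab) as [t [Ht Hb]].
  - intros c Hc'. apply cont_in_clamp; auto.
  - exists t. split; auto. intros y Hy. specialize (Ht y Hy). simpl in Ht.
    rewrite !clamp_id in Ht by auto. auto.
Qed.

Lemma min_attained g a b : a <= b -> cont_in g a b ->
  exists t, a <= t <= b /\ forall y, a <= y <= b -> g t <= g y.
Proof.
  intros Hab Hc.
  destruct (continuity_ab_min (fun y => g (clamp a b y)) a b Hab) as [t [Ht Hb]].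
  - intros c Hc'. apply cont_in_clamp; auto.
  - exists t. split; auto. intros y Hy. specialize (Ht y Hy). simpl in Ht.
    rewrite !clamp_id in Ht by auto. auto.
Qed.

Lemma positive_to_the_left g D x0 : 0 < x0 -> (forall x, 0 < x < x0 -> D x) ->
  limit1_in g D (g x0) x0 -> 0 < g x0 -> exists y, 0 < y < x0 /\ 0 < g y.
Proof.
  intros Hx0 HD Hl Hp. destruct (Hl (g x0) Hp) as [a [Ha Hu]].
  set (y := x0 - Rmin a x0 / 2).
  assert (Hm : 0 < Rmin a x0) by (apply Rmin_pos; lra).
  assert (H1 : Rmin a x0 <= a) by apply Rmin_l.
  assert (H2 : Rmin a x0 <= x0) by apply Rmin_r.
  exists y. split; [unfold y; lra|].
  assert (Hy : Rabs (g y - g x0) < g x0).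
  { apply (Hu y). split; [apply HD; unfold y; lra|]. simpl. unfold R_dist, y.
    rewrite Rabs_left; lra. }
  unfold Rabs in Hy; destruct Rcase_abs in Hy; lra.
Qed.

Lemma last_point_below g t y d : t <= y -> cont_in g t y -> g t <= d ->
  exists v, t <= v <= y /\ g v <= d /\ forall x, v < x <= y -> d < g x.
Proof.
  intros Hty Hc Ht.
  set (E := fun x => t <= x <= y /\ g x <= d).
  destruct (completeness E) as [v [Hub Hlub]].
  - exists y. intros x [Hx _]; lra.
  - exists t. split; lra.
  assert (Htv : t <= v) by (apply Hub; split; lra).
  assert (Hvy : v <= y) by (apply Hlub; intros x [Hx _]; lra).
  exists v. split; [lra|]. split.
  - destruct (Rle_or_lt (g v) d) as [|Hlt]; auto. exfalso.
    destruct (Hc v (conj Htv Hvy) (g v - d)) as [del [Hdel Hz]]; [lra|].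
    assert (v <= v - del); [|lra].
    apply Hlub. intros x [Hx Hgx]. assert (x <= v) by (apply Hub; split; auto).
    destruct (Rle_or_lt x (v - del)); auto.
    assert (Hxv : Rabs (x - v) < del) by (unfold Rabs; destruct Rcase_abs; lra).
    specialize (Hz x Hx Hxv). unfold Rabs in Hz; destruct Rcase_abs in Hz; lra.
  - intros x Hx. destruct (Rle_or_lt (g x) d) as [Hle|]; auto.
    assert (x <= v) by (apply Hub; split; [lra|auto]). lra.
Qed.

Lemma barrier g dg c t y : t < y ->
  (forall x, t <= x <= y -> derivable_pt_lim g x (dg x)) ->
  (forall x, t <= x <= y -> c < g x -> dg x <= 0) ->
  c < g y -> g y <= g t.
Proof.
  intros Hty Hd Hneg Hy.
  destruct (Rle_or_lt (g y) (g t)) as [Hle|Hlt]; [exact Hle|exfalso].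
  set (d := (Rmax c (g t) + g y) / 2).
  assert (Hcd : c < d /\ g t < d /\ d < g y) by (unfold d, Rmax; destruct Rle_dec; lra).
  destruct (last_point_below g t y d) as [v [Hv [Hgv Habove]]]; try lra.
  { apply derivable_cont_in with dg; auto. }
  assert (Hvy : v < y) by (destruct (Req_dec v y); subst; lra).
  destruct (MVT_cor2 g dg v y Hvy) as [cc [Hmv Hcc]]; [intros z Hz; apply Hd; lra|].
  assert (d < g cc) by (apply Habove; lra).
  assert (dg cc <= 0) by (apply Hneg; lra).
  nra.
Qed.

Lemma limit_le_of_le g D l x0 B :
  (forall d, 0 < d -> exists u, D u /\ Rabs (u - x0) < d /\ g u <= B) ->
  limit1_in g D l x0 -> l <= B.
Proof.
  intros Hnear Hl. destruct (Rle_or_lt l B) as [|Hlt]; auto. exfalso.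
  destruct (limit_at g D l x0 (l - B) Hl) as [a [Ha Hu]]; [lra|].
  destruct (Hnear a Ha) as [u [Du [Hua Hgu]]].
  specialize (Hu u Du Hua). unfold Rabs in Hu; destruct Rcase_abs in Hu; lra.
Qed.

Lemma limit_ge_of_ge g D l x0 B :
  (forall d, 0 < d -> exists u, D u /\ Rabs (u - x0) < d /\ B <= g u) ->
  limit1_in g D l x0 -> B <= l.
Proof.
  intros Hnear Hl.
  cut (- l <= - B); [lra|]. apply (limit_le_of_le (fun x => - g x) D (- l) x0 (- B)).
  - intros d Hd. destruct (Hnear d Hd) as [u [Du [Hu Hg]]]. exists u; repeat split; auto; lra.
  - apply limit_Ropp, Hl.
Qed.

Lemma right_limit_le g dg y l : 0 < y ->
  limit1_in g (fun x => 0 < x) l 0 ->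
  (forall x, 0 < x <= y -> derivable_pt_lim g x (dg x)) ->
  (forall x, 0 < x <= y -> 0 <= dg x) ->
  forall rho, 0 < rho <= y -> l <= g rho.
Proof.
  intros Hy Hl Hd Hp rho Hrho. apply (limit_le_of_le g (fun x => 0 < x) l 0); auto.
  intros d Hdpos. set (u := Rmin d rho / 2).
  assert (Hm : 0 < Rmin d rho) by (apply Rmin_pos; lra).
  assert (Rmin d rho <= d) by apply Rmin_l.
  assert (Rmin d rho <= rho) by apply Rmin_r.
  exists u. split; [unfold u; lra|]. split; [rewrite Rminus_0_r, Rabs_pos_eq; unfold u; lra|].
  apply (nondecreasing_of_deriv g dg); try (unfold u; lra).
  - apply derivable_cont_in with dg. intros; apply Hd; unfold u in *; lra.
  - intros; apply Hd; unfold u in *; lra.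
  - intros; apply Hp; unfold u in *; lra.
Qed.

Lemma derivable_pt_lim_linear m x : derivable_pt_lim (fun y => m * y) x m.
Proof.
  assert (H := derivable_pt_lim_scal (fun y => y) m x 1 (derivable_pt_lim_id x)).
  rewrite Rmult_1_r in H. exact H.
Qed.

Lemma linear_lower_bound (r dr : R -> R) y c : 0 < y ->
  limit1_in r (fun x => 0 < x) 0 0 ->
  (forall x, 0 < x <= y -> derivable_pt_lim r x (dr x)) ->
  (forall x, 0 < x <= y -> c <= dr x) ->
  forall rho, 0 < rho <= y -> c * rho <= r rho.
Proof.
  intros Hy Hl Hd Hc rho Hrho.
  assert (Hlim := limit_minus _ _ _ _ _ _ Hl
                    (limit_mul _ _ _ _ _ _ (limit_free (fun _ => c) _ 0 0) (lim_x (fun x => 0 < x) 0))).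
  rewrite Rmult_0_r, Rminus_0_r in Hlim.
  cut (0 <= r rho - c * rho); [lra|].
  apply (right_limit_le (fun x => r x - c * x) (fun x => dr x - c) y); auto.
  - intros x Hx. apply derivable_pt_lim_minus; [apply Hd; auto|apply derivable_pt_lim_linear].
  - intros x Hx. specialize (Hc x Hx). lra.
Qed.

Lemma linear_upper_bound (r dr : R -> R) y c : 0 < y ->
  limit1_in r (fun x => 0 < x) 0 0 ->
  (forall x, 0 < x <= y -> derivable_pt_lim r x (dr x)) ->
  (forall x, 0 < x <= y -> dr x <= c) ->
  forall rho, 0 < rho <= y -> r rho <= c * rho.
Proof.
  intros Hy Hl Hd Hc rho Hrho.
  assert (H := linear_lower_bound (fun x => - r x) (fun x => - dr x) y (- c) Hy).
  cut (- c * rho <= - r rho); [lra|]. apply H; auto.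
  - assert (Hl' := limit_Ropp _ _ _ _ Hl). rewrite Ropp_0 in Hl'. exact Hl'.
  - intros x Hx. apply derivable_pt_lim_opp, Hd, Hx.
  - intros x Hx. specialize (Hc x Hx). lra.
Qed.

(** Logarithmic blow-up: [g' >= K/x] on [(0,y]] with [K > 0] makes [g] unbounded below
    as [x -> 0+], since [g - K ln] is nondecreasing. *)
Lemma log_blowup (g dg : R -> R) y K c : 0 < y -> 0 < K ->
  (forall x, 0 < x <= y -> derivable_pt_lim g x (dg x)) ->
  (forall x, 0 < x <= y -> K / x <= dg x) ->
  (forall x, 0 < x <= y -> c <= g x) -> False.
Proof.
  intros Hy HK Hd Hdg Hlow.
  assert (Hcy : c <= g y) by (apply Hlow; lra).
  set (L := (g y - c + 1) / K).
  assert (HL : 0 < L) by (apply Rdiv_lt_0_compat; lra).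
  set (t := y * exp (- L)).
  assert (He : exp (- L) < 1)
    by (rewrite <- exp_0; apply exp_increasing; lra).
  assert (He0 := exp_pos (- L)).
  assert (Ht : 0 < t < y) by (unfold t; split; nra).
  destruct (MVT_cor2 (fun x => g x - K * ln x) (fun x => dg x - K * / x) t y)
    as [cc [Hmvt Hcc]]; [lra| |].
  - intros x Hx. apply derivable_pt_lim_minus; [apply Hd; lra|].
    apply derivable_pt_lim_scal, derivable_pt_lim_ln; lra.
  - assert (K / cc <= dg cc) by (apply Hdg; lra).
    assert (Hln : ln t = ln y - L) by (unfold t; rewrite ln_mult, ln_exp by auto; ring).
    assert (HKL : K * L = g y - c + 1) by (unfold L; field; lra).
    assert (c <= g t) by (apply Hlow; lra).
    unfold Rdiv in *. rewrite Hln in Hmvt. nra.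
Qed.

Lemma convex_slopes g x z y : convex_pos g -> 0 < x -> x < z -> z < y ->
  (g z - g x) / (z - x) <= (g y - g x) / (y - x) /\
  (g y - g x) / (y - x) <= (g y - g z) / (y - z).
Proof.
  intros Hc Hx Hxz Hzy.
  set (t := (y - z) / (y - x)).
  assert (Ht : 0 <= t <= 1).
  { unfold t; split.
    - apply Rmult_le_pos; [lra|]. left; apply Rinv_0_lt_compat; lra.
    - apply (Rmult_le_reg_r (y - x)); [lra|]. unfold Rdiv. rewrite Rmult_assoc, Rinv_l; lra. }
  assert (Hz : t * x + (1 - t) * y = z) by (unfold t; field; lra).
  specialize (Hc x y t Hx ltac:(lra) Ht). rewrite Hz in Hc.
  assert (H1t : 1 - t = (z - x) / (y - x)) by (unfold t; field; lra).
  split.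
  - apply (Rmult_le_reg_r (z - x)); [lra|].
    replace ((g z - g x) / (z - x) * (z - x)) with (g z - g x) by (field; lra).
    replace ((g y - g x) / (y - x) * (z - x)) with ((1 - t) * (g y - g x)) by (rewrite H1t; field; lra).
    nra.
  - apply (Rmult_le_reg_r (y - z)); [lra|].
    replace ((g y - g z) / (y - z) * (y - z)) with (g y - g z) by (field; lra).
    replace ((g y - g x) / (y - x) * (y - z)) with (t * (g y - g x)) by (unfold t; field; lra).
    nra.
Qed.

Lemma convex_deriv_mono g dg x y : convex_pos g ->
  (forall u, 0 < u -> derivable_pt_lim g u (dg u)) -> 0 < x -> x < y -> dg x <= dg y.
Proof.
  intros Hc Hd Hx Hxy.
  set (S := (g y - g x) / (y - x)).
  assert (A : dg x <= S).
  { destruct (Rle_or_lt (dg x) S) as [|Hlt]; auto. exfalso.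
    destruct (Hd x Hx (dg x - S) ltac:(lra)) as [del Hdel].
    set (h := Rmin del (y - x) / 2).
    assert (Hm : 0 < Rmin del (y - x)) by (apply Rmin_pos; [apply cond_pos|lra]).
    assert (Rmin del (y - x) <= del) by apply Rmin_l.
    assert (Rmin del (y - x) <= y - x) by apply Rmin_r.
    specialize (Hdel h ltac:(unfold h; lra) ltac:(rewrite Rabs_pos_eq; unfold h; lra)).
    destruct (convex_slopes g x (x + h) y Hc Hx ltac:(unfold h; lra) ltac:(unfold h; lra))
      as [C1 _].
    replace (x + h - x) with h in C1 by ring. fold S in C1.
    unfold Rabs in Hdel; destruct Rcase_abs in Hdel; lra. }
  assert (B : S <= dg y).
  { destruct (Rle_or_lt S (dg y)) as [|Hlt]; auto. exfalso.
    destruct (Hd y ltac:(lra) (S - dg y) ltac:(lra)) as [del Hdel].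
    set (h := Rmin del (y - x) / 2).
    assert (Hm : 0 < Rmin del (y - x)) by (apply Rmin_pos; [apply cond_pos|lra]).
    assert (Rmin del (y - x) <= del) by apply Rmin_l.
    assert (Rmin del (y - x) <= y - x) by apply Rmin_r.
    specialize (Hdel (- h) ltac:(unfold h; lra)
                  ltac:(rewrite Rabs_Ropp, Rabs_pos_eq; unfold h; lra)).
    destruct (convex_slopes g x (y - h) y Hc Hx ltac:(unfold h; lra) ltac:(unfold h; lra))
      as [_ C2].
    fold S in C2. replace (y - (y - h)) with h in C2 by ring.
    replace (y + - h) with (y - h) in Hdel by ring.
    replace ((g (y - h) - g y) / - h) with ((g y - g (y - h)) / h) in Hdel
      by (field; unfold h; lra).
    unfold Rabs in Hdel; destruct Rcase_abs in Hdel; lra. }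
  lra.
Qed.

Lemma convex_second_deriv_nonneg g dg d2 x : convex_pos g ->
  (forall u, 0 < u -> derivable_pt_lim g u (dg u)) -> 0 < x ->
  derivable_pt_lim dg x (d2 x) -> 0 <= d2 x.
Proof.
  intros Hc Hd Hx H2.
  destruct (Rle_or_lt 0 (d2 x)) as [|Hlt]; auto. exfalso.
  destruct (H2 (- d2 x) ltac:(lra)) as [del Hdel].
  assert (Hdp := cond_pos del).
  set (h := del / 2).
  specialize (Hdel h ltac:(unfold h; lra) ltac:(rewrite Rabs_pos_eq; unfold h; lra)).
  assert (dg x <= dg (x + h)) by (apply (convex_deriv_mono g); auto; unfold h; lra).
  assert (0 <= (dg (x + h) - dg x) / h).
  { apply Rmult_le_pos; [lra|]. left; apply Rinv_0_lt_compat; unfold h; lra. }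
  unfold Rabs in Hdel; destruct Rcase_abs in Hdel; lra.
Qed.

Lemma strictly_convex_convex g : strictly_convex_pos g -> convex_pos g.
Proof.
  intros H x y t Hx Hy Ht.
  destruct (Req_dec x y) as [->|Hne].
  { replace (t * y + (1 - t) * y) with y by ring. lra. }
  destruct (Req_dec t 0) as [->|H0].
  { replace (0 * x + (1 - 0) * y) with y by ring. lra. }
  destruct (Req_dec t 1) as [->|H1].
  { replace (1 * x + (1 - 1) * y) with x by ring. lra. }
  left. apply H; auto. lra.
Qed.

(** (A5)+(A6): [v phi'(v)] increases and [phi'(v) -> 0] as [v -> t0], so [phi' <= 0]
    on [(0,t0]] and [phi' > 0] on [(t0,oo)]. *)
Lemma dphi_sign (dphi : R -> R) t0 :
  (forall u v, 0 < u -> u < v -> u * dphi u < v * dphi v) ->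
  0 <= t0 -> limit1_in dphi (fun v => 0 < v) 0 t0 ->
  forall v, 0 < v -> (v <= t0 -> dphi v <= 0) /\ (t0 < v -> 0 < dphi v).
Proof.
  intros HA5 Ht0 Hl v Hv.
  assert (Hg := limit_mul _ _ _ _ _ _ (lim_x (fun v => 0 < v) t0) Hl).
  rewrite Rmult_0_r in Hg.
  split.
  - intros Hvt. cut (v * dphi v <= 0); [intros; nra|].
    apply (limit_ge_of_ge (fun u => u * dphi u) (fun u => 0 < u) 0 t0); auto.
    intros d Hd. exists (t0 + d / 2).
    split; [lra|]. split; [rewrite Rabs_pos_eq; lra|]. left; apply HA5; lra.
  - intros Htv. set (w := (t0 + v) / 2).
    assert (Hw : 0 <= w * dphi w).
    { apply (limit_le_of_le (fun u => u * dphi u) (fun u => 0 < u) 0 t0); auto.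
      intros d Hd. set (u := t0 + Rmin d (w - t0) / 2).
      assert (Hm : 0 < Rmin d (w - t0)) by (apply Rmin_pos; unfold w; lra).
      assert (Rmin d (w - t0) <= d) by apply Rmin_l.
      assert (Rmin d (w - t0) <= w - t0) by apply Rmin_r.
      exists u. split; [unfold u; lra|]. split; [rewrite Rabs_pos_eq; unfold u; lra|].
      left; apply HA5; unfold u; lra. }
    assert (w * dphi w < v * dphi v) by (apply HA5; unfold w; lra).
    nra.
Qed.

Lemma dphi_bracket_above (dphi : R -> R) t0 s tau Q1 F1 F2 :
  (forall u v, 0 < u -> u < v -> u * dphi u < v * dphi v) ->
  (forall v, 0 < v -> (v <= t0 -> dphi v <= 0) /\ (t0 < v -> 0 < dphi v)) ->
  is_lub (fun y => exists v, t0 < v /\ y = dphi v / dphi (s * v)) Q1 ->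
  0 < tau -> 1 < s -> 0 < F1 -> 0 < F2 -> F2 < s * F1 -> Q1 * F1 < F2 ->
  F1 * dphi tau - F2 * dphi (s * tau) < 0.
Proof.
  intros HA5 Hs [Hub _] Ht Hs1 HF1 HF2 H1 H2.
  destruct (Rle_or_lt tau t0) as [Hle|Hgt].
  - assert (HA : tau * dphi tau < (s * tau) * dphi (s * tau)) by (apply HA5; nra).
    assert (HB : dphi tau < s * dphi (s * tau)) by (apply (Rmult_lt_reg_l tau); nra).
    destruct (Rle_or_lt (dphi (s * tau)) 0) as [Hn|Hp].
    + assert (F1 * dphi tau < F1 * (s * dphi (s * tau))) by (apply Rmult_lt_compat_l; auto).
      nra.
    + assert (dphi tau <= 0) by (apply (proj1 (Hs tau Ht)); auto). nra.
  - assert (Hp1 : 0 < dphi tau) by (apply (proj2 (Hs tau Ht)); auto).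
    assert (Hp2 : 0 < dphi (s * tau)) by (apply (proj2 (Hs (s * tau) ltac:(nra))); nra).
    assert (Hq : dphi tau / dphi (s * tau) <= Q1) by (apply Hub; exists tau; split; auto).
    assert (dphi tau <= Q1 * dphi (s * tau)).
    { apply (Rmult_le_compat_r (dphi (s * tau))) in Hq; [|lra].
      unfold Rdiv in Hq. rewrite Rmult_assoc, Rinv_l in Hq; lra. }
    nra.
Qed.

Lemma dphi_bracket_below (dphi : R -> R) t0 s tau Q0 F1 F2 :
  (forall u v, 0 < u -> u < v -> u * dphi u < v * dphi v) ->
  (forall v, 0 < v -> (v <= t0 -> dphi v <= 0) /\ (t0 < v -> 0 < dphi v)) ->
  is_glb (fun y => exists v, t0 / s < v /\ y = dphi v / dphi (s * v)) Q0 ->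
  0 < tau -> 0 < s -> s < 1 -> 0 < F1 -> 0 < F2 -> s * F1 < F2 -> F2 < Q0 * F1 ->
  0 < F1 * dphi tau - F2 * dphi (s * tau).
Proof.
  intros HA5 Hs [Hlb _] Ht Hs0 Hs1 HF1 HF2 H1 H2.
  destruct (Rle_or_lt (s * tau) t0) as [Hle|Hgt].
  - assert (HA : (s * tau) * dphi (s * tau) < tau * dphi tau) by (apply HA5; nra).
    assert (HB : s * dphi (s * tau) < dphi tau) by (apply (Rmult_lt_reg_l tau); nra).
    assert (dphi (s * tau) <= 0) by (apply (proj1 (Hs (s * tau) ltac:(nra))); auto).
    assert (F1 * (s * dphi (s * tau)) < F1 * dphi tau) by (apply Rmult_lt_compat_l; auto).
    nra.
  - assert (Hp2 : 0 < dphi (s * tau)) by (apply (proj2 (Hs (s * tau) ltac:(nra))); nra).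
    assert (Hq : Q0 <= dphi tau / dphi (s * tau)).
    { apply Hlb; exists tau; split; auto.
      apply (Rmult_lt_reg_l s); auto. unfold Rdiv.
      rewrite <- Rmult_assoc, (Rmult_comm s t0), Rmult_assoc, Rinv_r; lra. }
    assert (Q0 * dphi (s * tau) <= dphi tau).
    { apply (Rmult_le_compat_r (dphi (s * tau))) in Hq; [|lra].
      unfold Rdiv in Hq. rewrite Rmult_assoc, Rinv_l in Hq; lra. }
    nra.
Qed.

(** [q1] is strictly decreasing on [[1,oo)], including at the endpoint [1], where only a
    one-sided derivative is available. *)
Lemma q1_decreasing (q1 dq1 : R -> R) :
  (forall s, 1 < s -> derivable_pt_lim q1 s (dq1 s)) ->
  limit1_in (fun s => (q1 s - q1 1) / (s - 1)) (fun s => 1 < s) (dq1 1) 1 ->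
  (forall s, 1 <= s -> dq1 s < 0) ->
  forall a b, 1 <= a -> a < b -> q1 b < q1 a.
Proof.
  intros Hd Hl Hneg a b Ha Hab.
  assert (Hc : cont_in q1 1 b).
  { apply (cont_in_right_limit q1 dq1); [intros; apply Hd; lra|].
    apply limit1_imp with (fun s => 1 < s); [intros; lra|].
    apply quotient_limit_continuous with (dq1 1); auto. intros; lra. }
  apply (decreasing_of_deriv q1 dq1); auto.
  - apply cont_in_sub with 1 b; auto; lra.
  - intros; apply Hd; lra.
  - intros; apply Hneg; lra.
Qed.

Lemma q0_decreasing (q0 dq0 : R -> R) :
  (forall s, 0 < s < 1 -> derivable_pt_lim q0 s (dq0 s)) ->
  limit1_in (fun s => (q0 s - q0 1) / (s - 1)) (fun s => 0 < s < 1) (dq0 1) 1 ->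
  (forall s, 0 < s <= 1 -> dq0 s < 0) ->
  forall a b, 0 < a -> a < b -> b <= 1 -> q0 b < q0 a.
Proof.
  intros Hd Hl Hneg a b Ha Hab Hb.
  assert (Hc : cont_in q0 a 1).
  { apply (cont_in_left_limit q0 dq0); [intros; apply Hd; lra|].
    apply limit1_imp with (fun s => 0 < s < 1); [intros; lra|].
    apply quotient_limit_continuous with (dq0 1); auto. intros; lra. }
  apply (decreasing_of_deriv q0 dq0); auto.
  - apply cont_in_sub with a 1; auto; lra.
  - intros; apply Hd; lra.
  - intros; apply Hneg; lra.
Qed.

(** The positive curvature mass [mu_+(x) = int_0^x s kappa_+(s) ds], as a Coquelicot
    integral of a density extended continuously by [0] to negative [s]. *)
Module CurvatureMass.
Import Coquelicot.Coquelicot.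

Definition mu_density (kappa : R -> R) (s : R) := Rmax 0 s * Rmax (kappa (Rmax 0 s)) 0.
Definition mu (kappa : R -> R) (x : R) := RInt (mu_density kappa) 0 x.

Section Density.
Variable kappa : R -> R.
Hypothesis Hk : forall x, 0 <= x -> limit1_in kappa (fun y => 0 <= y) (kappa x) x.

Lemma mu_density_cont x : continuity_pt (mu_density kappa) x.
Proof.
  unfold mu_density.
  assert (Hproj : forall y, Rabs (Rmax 0 y - Rmax 0 x) <= Rabs (y - x))
    by (intros y; unfold Rmax; repeat destruct Rle_dec; unfold Rabs;
        repeat destruct Rcase_abs; lra).
  apply continuity_pt_mult.
  - intros eps He. exists eps; split; auto. intros y [_ Hy]. simpl in *; unfold R_dist in *.
    eapply Rle_lt_trans; [apply Hproj|exact Hy].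
  - intros eps He. destruct (Hk (Rmax 0 x) (Rmax_l 0 x) eps He) as [d [Hd Hy]].
    exists d; split; auto. intros y [_ Hy']. simpl in *. unfold R_dist in *.
    assert (Hky : Rabs (kappa (Rmax 0 y) - kappa (Rmax 0 x)) < eps).
    { apply Hy. split; [apply Rmax_l|]. simpl; unfold R_dist.
      eapply Rle_lt_trans; [apply Hproj|exact Hy']. }
    revert Hky. generalize (kappa (Rmax 0 y)) (kappa (Rmax 0 x)). intros u v.
    unfold Rmax; repeat destruct Rle_dec; unfold Rabs; repeat destruct Rcase_abs; lra.
Qed.

Lemma mu_density_nonneg x : 0 <= mu_density kappa x.
Proof. unfold mu_density. apply Rmult_le_pos; apply Rmax_l || apply Rmax_r. Qed.

Lemma mu_density_pos_arg x : 0 < x -> mu_density kappa x = x * Rmax (kappa x) 0.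
Proof. intros Hx. unfold mu_density. rewrite Rmax_right by lra. reflexivity. Qed.

Lemma mu_deriv x : derivable_pt_lim (mu kappa) x (mu_density kappa x).
Proof.
  apply is_derive_Reals. unfold mu.
  apply (is_derive_RInt (mu_density kappa) (RInt (mu_density kappa) 0) 0 x).
  - exists (mkposreal 1 Rlt_0_1). intros y _.
    assert (Hex : ex_RInt (mu_density kappa) 0 y).
    { apply (ex_RInt_continuous (V:=R_CompleteNormedModule)).
      intros z _. apply continuity_pt_filterlim, mu_density_cont. }
    exact (RInt_correct _ _ _ Hex).
  - apply continuity_pt_filterlim, mu_density_cont.
Qed.

Lemma mu_zero : mu kappa 0 = 0.
Proof. unfold mu. rewrite RInt_point. reflexivity. Qed.

Lemma mu_mono a b : a <= b -> mu kappa a <= mu kappa b.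
Proof.
  intros Hab. apply (nondecreasing_of_deriv _ (mu_density kappa)); auto.
  - apply (derivable_cont_in _ (mu_density kappa)). intros; apply mu_deriv.
  - intros; apply mu_deriv.
  - intros; apply mu_density_nonneg.
Qed.

End Density.

Lemma mu_riemann (kappa : R -> R) M
  (pr : Riemann_integrable (fun s => s * Rmax (kappa s) 0) 0 M) :
  0 <= M -> mu kappa M = RiemannInt pr.
Proof.
  intros HM. rewrite <- RInt_Reals. unfold mu. apply RInt_ext.
  intros x Hx. rewrite Rmin_left in Hx by auto. rewrite Rmax_right in Hx by auto.
  apply mu_density_pos_arg. lra.
Qed.

End CurvatureMass.
Import CurvatureMass.

Lemma cont_in_reflect g a b : cont_in g a b -> cont_in (fun x => g (- x)) (- b) (- a).
Proof.
  intros H x Hx eps He. destruct (H (- x) ltac:(lra) eps He) as [d [Hd Hy]].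
  exists d; split; auto. intros y Hy' Hyd. apply Hy; [lra|].
  replace (- y - - x) with (- (y - x)) by ring. rewrite Rabs_Ropp. exact Hyd.
Qed.

Lemma first_nonpositive g z : 0 <= z -> cont_in g 0 z -> 0 < g 0 -> g z <= 0 ->
  exists x1, 0 < x1 <= z /\ g x1 <= 0 /\ forall y, 0 <= y < x1 -> 0 < g y.
Proof.
  intros Hz Hc H0 Hgz.
  destruct (last_point_below (fun x => g (- x)) (- z) 0 0) as [v [Hv [Hgv Habove]]].
  - lra.
  - assert (H := cont_in_reflect g 0 z Hc). rewrite Ropp_0 in H. exact H.
  - rewrite Ropp_involutive. exact Hgz.
  assert (Hv0 : v <> 0) by (intros ->; rewrite Ropp_0 in Hgv; lra).
  exists (- v). split; [lra|]. split; auto.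
  intros y Hy. replace y with (- - y) by ring. apply Habove. lra.
Qed.

Lemma deriv_zero_at_interior_max g x l a b : a < x < b ->
  derivable_pt_lim g x l -> (forall u, a < u < b -> g u <= g x) -> l = 0.
Proof.
  intros Hx Hd Hmax.
  assert (pr : derivable_pt g x) by (exists l; exact Hd).
  rewrite <- (derive_pt_eq_0 _ _ _ pr Hd).
  apply (deriv_maximum g a b x pr); try lra. intros; apply Hmax; lra.
Qed.

Lemma strict_increase_at_point g dg a b x : a < x < b -> cont_in g a b ->
  (forall u, a < u < b -> derivable_pt_lim g u (dg u)) ->
  (forall u, a < u < b -> 0 <= dg u) -> 0 < dg x -> g a < g b.
Proof.
  intros Hx Hc Hd Hp Hdx.
  destruct (Hd x Hx (dg x) Hdx) as [del Hdel].
  assert (Hdp := cond_pos del).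
  set (h := Rmin del (b - x) / 2).
  assert (Rmin del (b - x) <= del) by apply Rmin_l.
  assert (Rmin del (b - x) <= b - x) by apply Rmin_r.
  assert (Hm : 0 < Rmin del (b - x)) by (apply Rmin_pos; lra).
  assert (Hh : 0 < h) by (unfold h; lra).
  specialize (Hdel h ltac:(lra) ltac:(rewrite Rabs_pos_eq; unfold h in *; lra)).
  assert (Hq : 0 < (g (x + h) - g x) / h)
    by (unfold Rabs in Hdel; destruct Rcase_abs in Hdel; lra).
  assert (g x < g (x + h)).
  { apply Rmult_lt_compat_r with (r := h) in Hq; auto.
    replace ((g (x + h) - g x) / h * h) with (g (x + h) - g x) in Hq by (field; lra). lra. }
  assert (g a <= g x).
  { apply (nondecreasing_of_deriv g dg); try lra; auto.
    - apply cont_in_sub with a b; auto; lra.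
    - intros; apply Hd; lra.
    - intros; apply Hp; lra. }
  assert (g (x + h) <= g b).
  { apply (nondecreasing_of_deriv g dg); try (unfold h in *; lra); auto.
    - apply cont_in_sub with a b; auto; unfold h in *; lra.
    - intros; apply Hd; unfold h in *; lra.
    - intros; apply Hp; unfold h in *; lra. }
  lra.
Qed.

Section JacobiField.
Variables kappa f df : R -> R.
Hypothesis Hk : forall x, 0 <= x -> limit1_in kappa (fun y => 0 <= y) (kappa x) x.
Hypothesis Hf0 : f 0 = 0.
Hypothesis Hdf0 : df 0 = 1.
Hypothesis Hcf : forall b, cont_in f 0 b.
Hypothesis Hcdf : forall b, cont_in df 0 b.
Hypothesis Hf' : forall x, 0 < x -> derivable_pt_lim f x (df x).
Hypothesis Hf'' : forall x, 0 < x -> derivable_pt_lim df x (- kappa x * f x).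

(** Where [kappa > 0], [f] lies strictly below the chord [m u] bounding it: touching at
    [x] would make [x] an interior maximum of both [f - m u] and [f'], forcing
    [f'(x) = m] and [f''(x) = - kappa f = 0]. *)
Lemma below_chord_strict x1 m x : 0 < x < x1 -> 0 < kappa x -> 0 < f x ->
  (forall u, 0 <= u <= x1 -> df u <= m) ->
  (forall u, 0 <= u <= x1 -> f u <= m * u) -> f x < m * x.
Proof.
  intros Hx Hkx Hfx Hdfm Hfm.
  destruct (Rlt_or_le (f x) (m * x)) as [|Hge]; auto. exfalso.
  assert (Hdfx : df x - m = 0).
  { apply (deriv_zero_at_interior_max (fun u => f u - m * u) x _ 0 x1); [lra| |].
    - apply derivable_pt_lim_minus; [apply Hf'; lra|apply derivable_pt_lim_linear].
    - intros u Hu. assert (f u <= m * u) by (apply Hfm; lra). lra. }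
  assert (Hd2 : - kappa x * f x = 0).
  { apply (deriv_zero_at_interior_max df x _ 0 x1); [lra|apply Hf''; lra|].
    intros u Hu. replace (df x) with m by lra. apply Hdfm; lra. }
  nra.
Qed.

(** Core comparison: on [[t,x1]], where [f'] attains its maximum [m] at [t] and
    [0 < f(u) <= m u], the quantity [f' + m mu_+] is nondecreasing; if moreover the
    curvature mass of [[t,x1]] is at most [1], then [f'(x1) > 0]. *)
Lemma mass_comparison t x1 m :
  0 <= t < x1 -> 0 < m -> df t = m ->
  (forall u, 0 <= u <= x1 -> df u <= m) ->
  (forall u, 0 < u <= x1 -> 0 < f u) ->
  (forall u, 0 <= u <= x1 -> f u <= m * u) ->
  mu kappa x1 - mu kappa t <= 1 -> 0 < df x1.
Proof.
  intros Ht Hm Hdft Hdfm Hfpos Hfm Hmass.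
  set (w := fun x => df x + m * mu kappa x).
  set (dw := fun x => - kappa x * f x + m * mu_density kappa x).
  assert (Hdw : forall x, 0 < x -> derivable_pt_lim w x (dw x))
    by (intros x Hx; apply derivable_pt_lim_plus;
        [apply Hf''; auto|apply derivable_pt_lim_scal, mu_deriv; auto]).
  assert (Hcw : cont_in w t x1).
  { apply cont_in_plus; [apply cont_in_sub with 0 x1; auto; lra|].
    apply (derivable_cont_in _ (fun x => m * mu_density kappa x)).
    intros; apply derivable_pt_lim_scal, mu_deriv; auto. }
  assert (Hdwp : forall x, t < x < x1 -> 0 <= dw x).
  { intros x Hx. unfold dw. rewrite mu_density_pos_arg by (auto; lra).
    assert (0 < f x) by (apply Hfpos; lra). assert (f x <= m * x) by (apply Hfm; lra).
    unfold Rmax. destruct Rle_dec; nra. }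
  destruct (classic (exists x, t < x < x1 /\ 0 < kappa x)) as [[x [Hx Hkx]]|Hno].
  - (* positive curvature somewhere: [f < m u] there, so [w] increases strictly *)
    assert (Hfx : f x < m * x)
      by (apply (below_chord_strict x1 m); auto; [lra|apply Hfpos; lra]).
    assert (Hdwx : 0 < dw x).
    { unfold dw. rewrite mu_density_pos_arg by (auto; lra). rewrite Rmax_left by lra. nra. }
    assert (w t < w x1).
    { apply (strict_increase_at_point w dw t x1 x); auto.
      intros; apply Hdw; lra. }
    unfold w in *. nra.
  -
    assert (Hmass0 : mu kappa x1 <= mu kappa t).
    { apply (nonincreasing_of_deriv (mu kappa) (mu_density kappa)); try lra.
      - apply (derivable_cont_in _ (mu_density kappa)). intros; apply mu_deriv; auto.
      - intros; apply mu_deriv; auto.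
      - intros y Hy. rewrite mu_density_pos_arg by (auto; lra).
        destruct (Rle_or_lt (kappa y) 0).
        + rewrite Rmax_right by lra. lra.
        + exfalso; apply Hno; exists y; split; auto. }
    assert (w t <= w x1).
    { apply (nondecreasing_of_deriv w dw); try lra; auto. intros; apply Hdw; lra. }
    unfold w in *. nra.
Qed.

Lemma jacobi_derivative_pos M : 0 <= M -> mu kappa M <= 1 ->
  forall z, 0 <= z <= M -> 0 < df z.
Proof.
  intros HM Hmu z Hz. destruct (Rlt_or_le 0 (df z)) as [|Hneg]; auto. exfalso.
  destruct (first_nonpositive df z) as [x1 [Hx1 [Hdfx1 Hbefore]]]; auto; try lra.
  assert (Hfpos : forall u, 0 < u <= x1 -> 0 < f u).
  { intros u Hu. rewrite <- Hf0. apply (increasing_of_deriv f df); try lra.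
    - apply cont_in_sub with 0 u; auto; lra.
    - intros; apply Hf'; lra.
    - intros; apply Hbefore; lra. }
  destruct (max_attained df 0 x1) as [t [Ht Htmax]]; auto; try lra.
  assert (Hm1 : 1 <= df t) by (rewrite <- Hdf0; apply Htmax; lra).
  assert (Htx1 : t < x1) by (destruct (Req_dec t x1) as [E|]; [subst; lra|lra]).
  assert (Hfm : forall u, 0 <= u <= x1 -> f u <= df t * u).
  { intros u Hu. destruct (Req_dec u 0) as [->|Hu0]; [rewrite Hf0; lra|].
    destruct (MVT_in f df 0 u) as [c [Hc Hfc]]; try lra.
    - apply cont_in_sub with 0 u; auto; lra.
    - intros; apply Hf'; lra.
    - assert (df c <= df t) by (apply Htmax; lra). rewrite Hf0 in Hfc. nra. }
  assert (Hmass : mu kappa x1 - mu kappa t <= 1).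
  { assert (mu kappa x1 <= mu kappa M) by (apply mu_mono; auto; lra).
    assert (mu kappa 0 <= mu kappa t) by (apply mu_mono; auto; lra).
    rewrite mu_zero in *; auto. lra. }
  assert (0 < df x1) by (apply (mass_comparison t x1 (df t)); auto; lra).
  lra.
Qed.

End JacobiField.

Lemma cont_in_from_zero (g dg : R -> R) :
  limit1_in g (fun y => 0 <= y) (g 0) 0 -> (forall x, 0 < x -> derivable_pt_lim g x (dg x)) ->
  forall b, cont_in g 0 b.
Proof.
  intros H0 Hd b. apply (cont_in_right_limit g dg); [intros; apply Hd; lra|].
  apply limit1_imp with (fun y => 0 <= y); auto. intros; lra.
Qed.

Lemma b0_spec df x : 0 <= x -> cont_in df 0 x -> is_min_on df 0 x (b0 df x).
Proof.
  intros Hx Hc. unfold b0. apply epsilon_spec.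
  destruct (min_attained df 0 x Hx Hc) as [t [Ht Hm]]. exists (df t). split; eauto.
Qed.

Lemma b1_spec df x : 0 <= x -> cont_in df 0 x -> is_max_on df 0 x (b1 df x).
Proof.
  intros Hx Hc. unfold b1. apply epsilon_spec.
  destruct (max_attained df 0 x Hx Hc) as [t [Ht Hm]]. exists (df t). split; eauto.
Qed.

Section JacobiBounds.
Variables (f df : R -> R) (M : R).
Hypothesis Hf0 : f 0 = 0.
Hypothesis Hdf0 : df 0 = 1.
Hypothesis Hcf : forall b, cont_in f 0 b.
Hypothesis Hcdf : forall b, cont_in df 0 b.
Hypothesis Hf' : forall x, 0 < x -> derivable_pt_lim f x (df x).
Hypothesis Hdfpos : forall z, 0 <= z <= M -> 0 < df z.

Lemma jacobi_pos : forall z, 0 < z <= M -> 0 < f z.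
Proof.
  intros z Hz. rewrite <- Hf0. apply (increasing_of_deriv f df); try lra.
  - apply Hcf.
  - intros; apply Hf'; lra.
  - intros; apply Hdfpos; lra.
Qed.

Lemma b0_bounds : forall x y, 0 <= y <= x -> x <= M ->
  0 < b0 df x /\ b0 df x <= df y /\ b0 df x <= 1.
Proof.
  intros x y Hy Hx. destruct (b0_spec df x ltac:(lra) (Hcdf x)) as [[s0 [Hs0 Hs0e]] Hle].
  split; [rewrite <- Hs0e; apply Hdfpos; lra|]. split; [apply Hle; lra|].
  rewrite <- Hdf0. apply Hle; lra.
Qed.

Lemma b1_bounds : forall x y, 0 <= y <= x -> df y <= b1 df x /\ 1 <= b1 df x.
Proof.
  intros x y Hy. destruct (b1_spec df x ltac:(lra) (Hcdf x)) as [_ Hle].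
  split; [apply Hle; lra|]. rewrite <- Hdf0. apply Hle; lra.
Qed.

Lemma jacobi_linear_bounds : forall x z, 0 < z <= x -> x <= M ->
  b0 df x * z <= f z <= b1 df x * z.
Proof.
  intros x z Hz Hx. destruct (MVT_in f df 0 z) as [c [Hc Hce]]; try lra.
  - apply Hcf.
  - intros; apply Hf'; lra.
  - rewrite Hf0 in Hce.
    assert (b0 df x <= df c) by (apply (b0_bounds x c); lra).
    assert (df c <= b1 df x) by (apply (b1_bounds x c); lra).
    split; nra.
Qed.

End JacobiBounds.

Section Profile.
Variables r dr : R -> R.
Hypothesis Hr1 : forall rho, 0 < rho < 1 -> derivable_pt_lim r rho (dr rho).
Hypothesis Hr1at1 :
  limit1_in (fun x => (r x - r 1) / (x - 1)) (fun x => 0 < x < 1) (dr 1) 1.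
Hypothesis Hdrpos : forall rho, 0 < rho <= 1 -> 0 < dr rho.
Hypothesis Hreg : limit1_in r (fun x => 0 < x) 0 0.

Lemma profile_cont_in a : 0 < a -> cont_in r a 1.
Proof.
  intros Ha. apply (cont_in_left_limit r dr); [intros; apply Hr1; lra|].
  apply limit1_imp with (fun x => 0 < x < 1); [intros; lra|].
  apply quotient_limit_continuous with (dr 1); auto. intros; lra.
Qed.

Lemma profile_increasing x y : 0 < x -> x < y -> y <= 1 -> r x < r y.
Proof.
  intros Hx Hxy Hy. apply (increasing_of_deriv r dr); auto.
  - apply cont_in_sub with x 1; [apply profile_cont_in|..]; lra.
  - intros; apply Hr1; lra.
  - intros; apply Hdrpos; lra.
Qed.

Lemma profile_nondecreasing x y : 0 < x -> x <= y -> y <= 1 -> r x <= r y.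
Proof.
  intros Hx Hxy Hy. destruct (Req_dec x y) as [->|Hne]; [lra|].
  left; apply profile_increasing; lra.
Qed.

Lemma profile_pos x : 0 < x <= 1 -> 0 < r x.
Proof.
  intros Hx. apply Rle_lt_trans with (r (x / 2)); [|apply profile_increasing; lra].
  apply (limit_le_of_le r (fun u => 0 < u) 0 0); auto.
  intros d Hd. set (u := Rmin d (x / 2) / 2).
  assert (Hm : 0 < Rmin d (x / 2)) by (apply Rmin_pos; lra).
  assert (Rmin d (x / 2) <= d) by apply Rmin_l.
  assert (Rmin d (x / 2) <= x / 2) by apply Rmin_r.
  exists u. split; [unfold u; lra|]. split; [rewrite Rminus_0_r, Rabs_pos_eq; unfold u; lra|].
  left; apply profile_increasing; unfold u; lra.
Qed.

End Profile.

Definition tau (f r : R -> R) (x : R) := f (r x) / f x.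
Definition stretch (f r dr : R -> R) (x : R) := dr x / tau f r x.

Lemma sign_from_balance c N D E P y : 0 <= c -> 0 < N -> 0 <= P ->
  c * y = N * D - N * E * P ->
  (0 < E -> D < 0 -> y < 0) /\ (E < 0 -> 0 < D -> 0 < y).
Proof.
  intros Hc HN HP Heq. split; intros HE HD.
  - destruct (Rlt_or_le y 0) as [|Hy]; auto. exfalso.
    assert (0 <= c * y) by (apply Rmult_le_pos; auto).
    assert (N * D < 0) by nra. assert (0 <= N * E * P) by (apply Rmult_le_pos; nra). lra.
  - destruct (Rlt_or_le 0 y) as [|Hy]; auto. exfalso.
    assert (c * y <= 0) by nra.
    assert (0 < N * D) by nra. assert (N * E < 0) by nra.
    assert (N * E * P <= 0) by nra. lra.
Qed.

Lemma quotient_lower_bound k q b x z : 0 < x -> 0 < z -> z <= b * x -> 0 <= k ->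
  k * b <= q -> k / x <= q / z.
Proof.
  intros Hx Hz Hzb Hk Hq. unfold Rdiv.
  apply (Rmult_le_reg_r (x * z)); [nra|].
  replace (k * / x * (x * z)) with (k * z) by (field; lra).
  replace (q * / z * (x * z)) with (q * x) by (field; lra).
  nra.
Qed.

Section Equilibrium.
Variable n : nat.
Hypothesis Hn : (2 <= n)%nat.
Variables (f df : R -> R) (M : R).
Hypothesis HM1 : 1 <= M.
Hypothesis Hfpos : forall z, 0 < z <= M -> 0 < f z.
Hypothesis Hf' : forall x, 0 < x -> derivable_pt_lim f x (df x).
Hypothesis Hflin : forall x z, 0 < z <= x -> x <= M -> b0 df x * z <= f z <= b1 df x * z.
Hypothesis Hb0 : forall x y, 0 <= y <= x -> x <= M ->
  0 < b0 df x /\ b0 df x <= df y /\ b0 df x <= 1.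
Hypothesis Hb1 : forall x y, 0 <= y <= x -> df y <= b1 df x /\ 1 <= b1 df x.
Variables dphi d2phi d2h : R -> R.
Hypothesis Hd2phi : forall x, 0 < x -> 0 <= d2phi x.
Hypothesis Hd2h : forall x, 0 < x -> 0 <= d2h x.
Variable t0 : R.
Hypothesis HA5 : forall u v, 0 < u -> u < v -> u * dphi u < v * dphi v.
Hypothesis Hsign : forall v, 0 < v -> (v <= t0 -> dphi v <= 0) /\ (t0 < v -> 0 < dphi v).
Variables q1 q0 q1inv q0inv : R -> R.
Hypothesis Hq1 : forall s, 1 <= s ->
  is_lub (fun y => exists v, t0 < v /\ y = dphi v / dphi (s * v)) (q1 s).
Hypothesis Hq0 : forall s, 0 < s -> s <= 1 ->
  is_glb (fun y => exists v, t0 / s < v /\ y = dphi v / dphi (s * v)) (q0 s).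
Hypothesis Hq1dec : forall a b, 1 <= a -> a < b -> q1 b < q1 a.
Hypothesis Hq0dec : forall a b, 0 < a -> a < b -> b <= 1 -> q0 b < q0 a.
Hypothesis Hq1inv : forall y, 0 < y <= 1 -> 1 <= q1inv y /\ q1 (q1inv y) = y.
Hypothesis Hq0inv : forall y, 1 <= y -> (0 < q0inv y <= 1) /\ q0 (q0inv y) = y.
Variables r dr d2r : R -> R.
Hypothesis Hr1 : forall rho, 0 < rho < 1 -> derivable_pt_lim r rho (dr rho).
Hypothesis Hr2 : forall rho, 0 < rho < 1 -> derivable_pt_lim dr rho (d2r rho).
Hypothesis Hdrc : forall rho, 0 < rho <= 1 -> limit1_in dr (fun x => 0 < x <= 1) (dr rho) rho.
Hypothesis Hdrpos : forall rho, 0 < rho <= 1 -> 0 < dr rho.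
Hypothesis Hreg : limit1_in r (fun x => 0 < x) 0 0.
Hypothesis Hrange : forall x, 0 < x <= 1 -> 0 < r x <= M.
Hypothesis Hrmono : forall x y, 0 < x -> x <= y -> y <= 1 -> r x <= r y.
Hypothesis Hrcont : forall a, 0 < a -> cont_in r a 1.
Hypothesis Heq : forall rho, 0 < rho < 1 ->
  let tau := f (r rho) / f rho in
  f rho * (d2phi (dr rho) + d2h (dr rho * tau ^ (n - 1)) * tau ^ (2 * (n - 1)))
    * d2r rho
  = INR (n - 1) * (df (r rho) * dphi tau - df rho * dphi (dr rho))
    - INR (n - 1) * (df (r rho) * dr rho - df rho * tau)
        * d2h (dr rho * tau ^ (n - 1)) * dr rho * tau ^ (2 * n - 3).

Local Notation T := (tau f r).
Local Notation S := (stretch f r dr).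

Lemma tau_pos x : 0 < x <= 1 -> 0 < T x.
Proof.
  intros Hx. unfold tau. apply Rdiv_lt_0_compat; apply Hfpos; [apply Hrange; auto|lra].
Qed.

Lemma stretch_pos x : 0 < x <= 1 -> 0 < S x.
Proof. intros Hx. unfold stretch. apply Rdiv_lt_0_compat; [apply Hdrpos|apply tau_pos]; auto. Qed.

Lemma dr_eq x : 0 < x <= 1 -> dr x = S x * T x.
Proof. intros Hx. assert (0 < T x) by (apply tau_pos; auto). unfold stretch. field. lra. Qed.

Lemma tau_deriv x : 0 < x < 1 ->
  derivable_pt_lim T x (T x * (df (r x) * S x - df x) / f x).
Proof.
  intros Hx.
  assert (Hfx : 0 < f x) by (apply Hfpos; lra).
  assert (Hfr : 0 < f (r x)) by (apply Hfpos, Hrange; lra).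
  assert (H := derivable_pt_lim_div (comp f r) f x _ _
     (derivable_pt_lim_comp r f x _ _ (Hr1 x Hx) (Hf' (r x) ltac:(apply Hrange; lra)))
     (Hf' x ltac:(lra)) ltac:(lra)).
  replace (T x * (df (r x) * S x - df x) / f x)
    with ((df (r x) * dr x * f x - df x * comp f r x) / (f x)²)
    by (unfold stretch, tau, comp, Rsqr; field; lra).
  exact H.
Qed.

Lemma stretch_deriv x : 0 < x < 1 ->
  derivable_pt_lim S x (d2r x / T x - S x * (df (r x) * S x - df x) / f x).
Proof.
  intros Hx.
  assert (Hfx : 0 < f x) by (apply Hfpos; lra).
  assert (Ht : 0 < T x) by (apply tau_pos; lra).
  assert (H := derivable_pt_lim_div dr T x _ _ (Hr2 x Hx) (tau_deriv x Hx) ltac:(lra)).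
  replace (d2r x / T x - S x * (df (r x) * S x - df x) / f x)
    with ((d2r x * T x - T x * (df (r x) * S x - df x) / f x * dr x) / (T x)²)
    by (unfold stretch, Rsqr; field; lra).
  exact H.
Qed.

Lemma d2r_sign x : 0 < x < 1 ->
  (0 < df (r x) * S x - df x -> df (r x) * dphi (T x) - df x * dphi (S x * T x) < 0 ->
     d2r x < 0) /\
  (df (r x) * S x - df x < 0 -> 0 < df (r x) * dphi (T x) - df x * dphi (S x * T x) ->
     0 < d2r x).
Proof.
  intros Hx.
  assert (Hfx : 0 < f x) by (apply Hfpos; lra).
  assert (Ht : 0 < T x) by (apply tau_pos; lra).
  assert (Hd : 0 < dr x) by (apply Hdrpos; lra).
  assert (Hdr := dr_eq x ltac:(lra)).
  assert (HE := Heq x Hx). cbv zeta in HE. change (f (r x) / f x) with (T x) in HE.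
  set (B := d2h (dr x * T x ^ (n - 1))) in HE.
  assert (HTn : forall k, 0 < T x ^ k) by (intros k; apply pow_lt; lra).
  assert (HB : 0 <= B) by (apply Hd2h, Rmult_lt_0_compat; [lra|apply HTn]).
  apply (sign_from_balance (f x * (d2phi (dr x) + B * T x ^ (2 * (n - 1))))
           (INR (n - 1)) _ _ (T x * B * dr x * T x ^ (2 * n - 3))).
  - assert (0 <= d2phi (dr x)) by (apply Hd2phi; lra).
    specialize (HTn (2 * (n - 1))%nat).
    apply Rmult_le_pos; [lra|]. apply Rplus_le_le_0_compat; [lra|]. apply Rmult_le_pos; lra.
  - apply lt_0_INR. lia.
  - specialize (HTn (2 * n - 3)%nat).
    apply Rmult_le_pos; [apply Rmult_le_pos; [apply Rmult_le_pos|]|]; lra.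
  - rewrite HE. replace (S x * T x) with (dr x) by lra.
    replace (df (r x) * dr x - df x * T x) with (T x * (df (r x) * S x - df x))
      by (rewrite Hdr; ring).
    ring.
Qed.

Section AtRadius.
Variable rho0 : R.
Hypothesis Hrho0 : 0 < rho0 <= 1.

Local Notation B0r := (b0 df (r rho0)).
Local Notation B1r := (b1 df (r rho0)).
Local Notation B0p := (b0 df rho0).
Local Notation B1p := (b1 df rho0).

Lemma df_window x : 0 < x <= rho0 ->
  B0r <= df (r x) <= B1r /\ B0p <= df x <= B1p.
Proof.
  intros Hx. assert (Hr0 := Hrange rho0 Hrho0). assert (Hrx := Hrange x ltac:(lra)).
  assert (r x <= r rho0) by (apply Hrmono; lra).
  split; split; try (apply Hb0; lra); apply Hb1; lra.
Qed.

Lemma window_constants : 0 < B0r <= 1 /\ 0 < B0p <= 1 /\ 1 <= B1r /\ 1 <= B1p.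
Proof.
  assert (Hr0 := Hrange rho0 Hrho0).
  repeat split; try apply (Hb0 _ 0); try apply (Hb1 _ 0); lra.
Qed.

Lemma tau_limit : limit1_in T (fun x => 0 < x <= 1) (T rho0) rho0.
Proof.
  assert (Hr0 := Hrange rho0 Hrho0).
  assert (Hlim_r : limit1_in r (fun x => 0 < x <= 1) (r rho0) rho0).
  { intros eps He. destruct (Hrcont (rho0 / 2) ltac:(lra) rho0 ltac:(lra) eps He) as [d [Hd Hu]].
    exists (Rmin d (rho0 / 2)). split; [apply Rmin_pos; lra|].
    intros x [Hx Hxd]. simpl in *. unfold R_dist in *.
    assert (Rabs (x - rho0) < d) by (eapply Rlt_le_trans; [exact Hxd|apply Rmin_l]).
    assert (Rabs (x - rho0) < rho0 / 2) by (eapply Rlt_le_trans; [exact Hxd|apply Rmin_r]).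
    apply Hu; auto. unfold Rabs in *; destruct Rcase_abs; lra. }
  assert (Hcont : forall z, 0 < z -> limit1_in f (fun _ => True) (f z) z).
  { intros z Hz eps He.
    destruct (continuity_pt_near f z eps) as [d [Hd Hu]]; auto.
    - apply derivable_continuous_pt. exists (df z). apply Hf'; auto.
    - exists d; split; auto. intros x [_ Hx]. apply Hu, Hx. }
  assert (H1 := limit_comp r f _ _ _ _ _ Hlim_r (Hcont (r rho0) ltac:(lra))).
  apply limit1_imp with (D1 := fun x => 0 < x <= 1) in H1; [|intros x Hx; split; auto].
  assert (H2 := limit1_imp _ _ (fun x => 0 < x <= 1) _ _ (fun x _ => I) (Hcont rho0 ltac:(lra))).
  assert (Hf0 : 0 < f rho0) by (apply Hfpos; lra).
  exact (limit_mul _ _ _ _ _ _ H1 (limit_inv _ _ _ _ H2 ltac:(lra))).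
Qed.

(** A lower (upper) bound on [r'] near [0] gives a lower (upper) bound on [tau],
    through [r(rho) ~ r'(.) rho] and the linear bounds on [f]. *)
Lemma tau_lower_of_slope y c : 0 < y < rho0 -> 0 <= c ->
  (forall x, 0 < x <= y -> c <= dr x) ->
  forall x, 0 < x <= y -> B0r * c / B1p <= T x.
Proof.
  intros Hy Hc Hslope x Hx.
  assert (Hr0 := Hrange rho0 Hrho0). assert (Hrx := Hrange x ltac:(lra)).
  assert (r x <= r rho0) by (apply Hrmono; lra).
  assert (Hcx : c * x <= r x)
    by (apply (linear_lower_bound r dr y c); auto; [lra|intros; apply Hr1; lra]).
  assert (Hfr := Hflin (r rho0) (r x) ltac:(lra) ltac:(lra)).
  assert (Hfx := Hflin rho0 x ltac:(lra) ltac:(lra)).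
  destruct window_constants as [HB0r [_ [_ HB1p]]].
  assert (Hfxp : 0 < f x) by (apply Hfpos; lra).
  unfold tau. apply (Rmult_le_reg_r (f x)); auto.
  replace (f (r x) / f x * f x) with (f (r x)) by (field; lra).
  replace (B0r * c / B1p * f x) with (B0r * c * (f x / B1p)) by (field; lra).
  assert (f x / B1p <= x).
  { apply (Rmult_le_reg_r B1p); [lra|]. replace (f x / B1p * B1p) with (f x) by (field; lra). nra. }
  assert (0 <= B0r * c) by (apply Rmult_le_pos; lra).
  nra.
Qed.

Lemma tau_upper_of_slope y c : 0 < y < rho0 -> 0 <= c ->
  (forall x, 0 < x <= y -> dr x <= c) ->
  forall x, 0 < x <= y -> T x <= B1r * c / B0p.
Proof.
  intros Hy Hc Hslope x Hx.
  assert (Hr0 := Hrange rho0 Hrho0). assert (Hrx := Hrange x ltac:(lra)).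
  assert (r x <= r rho0) by (apply Hrmono; lra).
  assert (Hcx : r x <= c * x)
    by (apply (linear_upper_bound r dr y c); auto; [lra|intros; apply Hr1; lra]).
  assert (Hfr := Hflin (r rho0) (r x) ltac:(lra) ltac:(lra)).
  assert (Hfx := Hflin rho0 x ltac:(lra) ltac:(lra)).
  destruct window_constants as [HB0r [HB0p [HB1r _]]].
  assert (Hfxp : 0 < f x) by (apply Hfpos; lra).
  unfold tau. apply (Rmult_le_reg_r (f x)); auto.
  replace (f (r x) / f x * f x) with (f (r x)) by (field; lra).
  replace (B1r * c / B0p * f x) with (B1r * c * (f x / B0p)) by (field; lra).
  assert (x <= f x / B0p).
  { apply (Rmult_le_reg_r B0p); [lra|]. replace (f x / B0p * B0p) with (f x) by (field; lra). nra. }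
  assert (0 <= B1r * c) by (apply Rmult_le_pos; lra).
  assert (B1r * r x <= B1r * (c * x)) by (apply Rmult_le_compat_l; lra).
  nra.
Qed.

Local Notation a1 := (alpha1 df q1inv rho0 (r rho0)).
Local Notation a0 := (alpha0 df q0inv rho0 (r rho0)).

Lemma above_alpha1 x : 0 < x <= rho0 -> x < 1 -> a1 < S x ->
  B0r * (S x - a1) <= df (r x) * S x - df x /\ d2r x < 0.
Proof.
  intros Hx Hx1 HS.
  destruct (df_window x Hx) as [[HF1a HF1b] [HF2a HF2b]].
  destruct window_constants as [HB0r [HB0p [HB1r HB1p]]].
  assert (Ha1 : B1p / B0r <= a1) by apply Rmax_l.
  assert (Ha2 : q1inv (B0p / B1r) <= a1) by apply Rmax_r.
  assert (Ht : 0 < T x) by (apply tau_pos; lra).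
  set (F1 := df (r x)) in *. set (F2 := df x) in *. set (s := S x) in *.
  assert (Hratio : B1p / B0r * B0r = B1p) by (field; lra).
  assert (HaF : F2 <= a1 * F1).
  { assert (0 <= B1p / B0r) by (apply Rlt_le, Rdiv_lt_0_compat; lra). nra. }
  assert (HE : B0r * (s - a1) <= F1 * s - F2).
  { assert (1 <= B1p / B0r) by nra. nra. }
  split; auto.
  set (y0 := B0p / B1r) in *.
  assert (Hy0 : 0 < y0 <= 1).
  { unfold y0. split; [apply Rdiv_lt_0_compat; lra|].
    apply (Rmult_le_reg_r B1r); [lra|]. replace (B0p / B1r * B1r) with B0p by (field; lra). lra. }
  destruct (Hq1inv y0 Hy0) as [Hqi1 Hqi2].
  assert (Hq : q1 s < y0) by (rewrite <- Hqi2; apply Hq1dec; lra).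
  assert (HQF : q1 s * F1 < F2).
  { assert (y0 * B1r = B0p) by (unfold y0; field; lra).
    assert (q1 s * F1 < y0 * F1) by (apply Rmult_lt_compat_r; lra).
    assert (y0 * F1 <= y0 * B1r) by (apply Rmult_le_compat_l; lra). lra. }
  assert (HEpos : 0 < F1 * s - F2).
  { assert (0 < B0r * (s - a1)) by (apply Rmult_lt_0_compat; lra). lra. }
  apply (proj1 (d2r_sign x ltac:(lra))); [exact HEpos|].
  apply (dphi_bracket_above dphi t0 s (T x) (q1 s) F1 F2); auto; try nra.
  apply Hq1. nra.
Qed.

Lemma below_alpha0 x : 0 < x <= rho0 -> x < 1 -> S x < a0 ->
  B0r * (a0 - S x) <= df x - df (r x) * S x /\ 0 < d2r x.
Proof.
  intros Hx Hx1 HS.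
  destruct (df_window x Hx) as [[HF1a HF1b] [HF2a HF2b]].
  destruct window_constants as [HB0r [HB0p [HB1r HB1p]]].
  assert (Ha1 : a0 <= B0p / B1r) by apply Rmin_l.
  assert (Ha2 : a0 <= q0inv (B1p / B0r)) by apply Rmin_r.
  assert (Ht : 0 < T x) by (apply tau_pos; lra).
  assert (Hs0 : 0 < S x) by (apply stretch_pos; lra).
  set (F1 := df (r x)) in *. set (F2 := df x) in *. set (s := S x) in *.
  assert (Hratio : B0p / B1r * B1r = B0p) by (field; lra).
  assert (Hratio1 : B0p / B1r <= 1).
  { apply (Rmult_le_reg_r B1r); [lra|]. lra. }
  assert (HaF : a0 * F1 <= F2).
  { assert (0 <= B0p / B1r) by (apply Rlt_le, Rdiv_lt_0_compat; lra). nra. }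
  assert (HE : B0r * (a0 - s) <= F2 - F1 * s) by nra.
  split; auto.
  set (y1 := B1p / B0r) in *.
  assert (Hy1 : y1 * B0r = B1p) by (unfold y1; field; lra).
  assert (Hy1ge : 1 <= y1) by nra.
  destruct (Hq0inv y1 Hy1ge) as [Hqi1 Hqi2].
  assert (Hq : y1 < q0 s) by (rewrite <- Hqi2; apply Hq0dec; lra).
  assert (HQF : F2 < q0 s * F1).
  { assert (y1 * B0r <= y1 * F1) by (apply Rmult_le_compat_l; lra).
    assert (y1 * F1 < q0 s * F1) by (apply Rmult_lt_compat_r; lra). lra. }
  assert (HEneg : F1 * s - F2 < 0).
  { assert (0 < B0r * (a0 - s)) by (apply Rmult_lt_0_compat; lra). lra. }
  apply (proj2 (d2r_sign x ltac:(lra))); [exact HEneg|].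
  apply (dphi_bracket_below dphi t0 s (T x) (q0 s) F1 F2); auto; try nra.
  apply Hq0; lra.
Qed.

(** Trapping: once [s > alpha1] at [y], [s' < 0] in that region, so [s >= s(y)] on [(0,y]]. *)
Lemma above_alpha1_persists y : 0 < y < rho0 -> a1 < S y ->
  forall x, 0 < x <= y -> S y <= S x.
Proof.
  intros Hy HSy x Hx. destruct (Req_dec x y) as [->|Hne]; [lra|].
  apply (barrier S (fun z => d2r z / T z - S z * (df (r z) * S z - df z) / f z) a1 x y);
    try lra.
  - intros z Hz. apply stretch_deriv. lra.
  - intros z Hz HSz. destruct (above_alpha1 z ltac:(lra) ltac:(lra) HSz) as [HE Hd2].
    assert (0 < / T z) by (apply Rinv_0_lt_compat, tau_pos; lra).
    assert (0 < / f z) by (apply Rinv_0_lt_compat, Hfpos; lra).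
    assert (0 < S z) by (apply stretch_pos; lra).
    assert (0 < b0 df (r rho0)) by apply window_constants.
    assert (0 < df (r z) * S z - df z).
    { assert (0 < b0 df (r rho0) * (S z - a1)) by (apply Rmult_lt_0_compat; lra). lra. }
    assert (0 < S z * (df (r z) * S z - df z)) by (apply Rmult_lt_0_compat; lra).
    assert (d2r z * / T z < 0) by nra.
    assert (0 < S z * (df (r z) * S z - df z) * / f z) by (apply Rmult_lt_0_compat; lra).
    unfold Rdiv. lra.
Qed.

Lemma below_alpha0_persists y : 0 < y < rho0 -> S y < a0 ->
  forall x, 0 < x <= y -> S x <= S y.
Proof.
  intros Hy HSy x Hx. destruct (Req_dec x y) as [->|Hne]; [lra|].
  cut (- S y <= - S x); [lra|].
  apply (barrier (fun z => - S z)
           (fun z => - (d2r z / T z - S z * (df (r z) * S z - df z) / f z)) (- a0) x y);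
    try lra.
  - intros z Hz. apply derivable_pt_lim_opp, stretch_deriv. lra.
  - intros z Hz HSz. destruct (below_alpha0 z ltac:(lra) ltac:(lra) ltac:(lra)) as [HE Hd2].
    assert (0 < / T z) by (apply Rinv_0_lt_compat, tau_pos; lra).
    assert (0 < / f z) by (apply Rinv_0_lt_compat, Hfpos; lra).
    assert (0 < S z) by (apply stretch_pos; lra).
    assert (0 < b0 df (r rho0)) by apply window_constants.
    assert (0 < df z - df (r z) * S z).
    { assert (0 < b0 df (r rho0) * (a0 - S z)) by (apply Rmult_lt_0_compat; lra). lra. }
    assert (0 < S z * (df z - df (r z) * S z)) by (apply Rmult_lt_0_compat; lra).
    assert (0 < d2r z * / T z) by (apply Rmult_lt_0_compat; lra).
    assert (0 < S z * (df z - df (r z) * S z) * / f z) by (apply Rmult_lt_0_compat; lra).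
    unfold Rdiv. nra.
Qed.

Lemma stretch_above_to_the_left a : a * T rho0 < dr rho0 ->
  exists y, 0 < y < rho0 /\ a < S y.
Proof.
  intros Hgt.
  assert (Hlim : limit1_in (fun x => dr x - a * T x) (fun x => 0 < x <= 1)
                   (dr rho0 - a * T rho0) rho0)
    by exact (limit_minus _ _ _ _ _ _ (Hdrc rho0 Hrho0)
               (limit_mul _ _ _ _ _ _ (limit_free (fun _ => a) _ rho0 rho0) tau_limit)).
  destruct (positive_to_the_left _ (fun x => 0 < x <= 1) rho0 ltac:(lra) ltac:(intros; lra)
              Hlim ltac:(cbv beta; lra)) as [y [Hy Hpos]].
  exists y. split; auto.
  assert (HTy : 0 < T y) by (apply tau_pos; lra).
  unfold stretch. apply (Rmult_lt_reg_r (T y)); [lra|].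
  replace (dr y / T y * T y) with (dr y) by (field; lra). cbv beta in Hpos. lra.
Qed.

Lemma stretch_below_to_the_left a : dr rho0 < a * T rho0 ->
  exists y, 0 < y < rho0 /\ S y < a.
Proof.
  intros Hlt.
  assert (Hlim : limit1_in (fun x => a * T x - dr x) (fun x => 0 < x <= 1)
                   (a * T rho0 - dr rho0) rho0)
    by exact (limit_minus _ _ _ _ _ _
               (limit_mul _ _ _ _ _ _ (limit_free (fun _ => a) _ rho0 rho0) tau_limit)
               (Hdrc rho0 Hrho0)).
  destruct (positive_to_the_left _ (fun x => 0 < x <= 1) rho0 ltac:(lra) ltac:(intros; lra)
              Hlim ltac:(cbv beta; lra)) as [y [Hy Hpos]].
  exists y. split; auto.
  assert (HTy : 0 < T y) by (apply tau_pos; lra).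
  unfold stretch. apply (Rmult_lt_reg_r (T y)); [lra|].
  replace (dr y / T y * T y) with (dr y) by (field; lra). cbv beta in Hpos. lra.
Qed.

(** Upper bound [r'(rho0) <= alpha1 tau(rho0)]: otherwise [s >= s(y) > alpha1] on some
    [(0,y]], so [r' >= r'(y)], [tau >= c1 > 0] and [tau' >= K / x]: [tau] blows down. *)
Lemma upper_slope_bound : dr rho0 <= a1 * T rho0.
Proof.
  destruct (Rle_or_lt (dr rho0) (a1 * T rho0)) as [|Hgt]; auto. exfalso.
  destruct window_constants as [HB0r [HB0p [HB1r HB1p]]].
  destruct (stretch_above_to_the_left a1 Hgt) as [y [Hy HSy]].
  assert (Hstay := above_alpha1_persists y Hy HSy).
  assert (Hdry : 0 < dr y) by (apply Hdrpos; lra).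
  assert (Hdr : forall x, 0 < x <= y -> dr y <= dr x).
  { intros x Hx. apply (nonincreasing_of_deriv dr d2r x y); try lra.
    - apply (derivable_cont_in _ d2r). intros; apply Hr2; lra.
    - intros; apply Hr2; lra.
    - intros z Hz. left. apply (above_alpha1 z); try lra. specialize (Hstay z ltac:(lra)); lra. }
  set (c1 := B0r * dr y / B1p).
  assert (Hc1 : 0 < c1) by (unfold c1; apply Rdiv_lt_0_compat; nra).
  assert (HTlow := tau_lower_of_slope y (dr y) ltac:(lra) ltac:(lra) Hdr).
  set (K := c1 * (B0r * (S y - a1)) / B1p).
  assert (HK : 0 < K) by (unfold K; apply Rdiv_lt_0_compat; [apply Rmult_lt_0_compat|]; nra).
  apply (log_blowup T (fun x => T x * (df (r x) * S x - df x) / f x) y K 0); try lra.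
  - intros x Hx. apply tau_deriv; lra.
  - intros x Hx. assert (Hsx := Hstay x Hx).
    destruct (above_alpha1 x ltac:(lra) ltac:(lra) ltac:(lra)) as [HE _].
    assert (HTx : c1 <= T x) by (apply HTlow; auto).
    apply (quotient_lower_bound _ _ B1p); try lra.
    + apply Hfpos; lra.
    + apply (Hflin rho0 x); lra.
    + replace (K * B1p) with (c1 * (B0r * (S y - a1))) by (unfold K; field; lra).
      apply Rmult_le_compat; nra.
  - intros x Hx. left; apply tau_pos; lra.
Qed.

(** Below [alpha0] the excess [E] is negative, so [tau] decreases. *)
Lemma below_alpha0_tau_nonincreasing y : 0 < y < rho0 ->
  (forall z, 0 < z <= y -> S z < a0) -> forall x, 0 < x <= y -> T y <= T x.
Proof.
  intros Hy Hbelow x Hx.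
  apply (nonincreasing_of_deriv T (fun z => T z * (df (r z) * S z - df z) / f z) x y);
    try lra.
  - apply derivable_cont_in with (fun z => T z * (df (r z) * S z - df z) / f z).
    intros; apply tau_deriv; lra.
  - intros; apply tau_deriv; lra.
  - intros z Hz. assert (HSz := Hbelow z ltac:(lra)).
    destruct (below_alpha0 z ltac:(lra) ltac:(lra) HSz) as [HEz _].
    assert (0 < b0 df (r rho0)) by apply window_constants.
    assert (0 < T z) by (apply tau_pos; lra).
    assert (0 < / f z) by (apply Rinv_0_lt_compat, Hfpos; lra).
    assert (0 < df z - df (r z) * S z).
    { assert (0 < b0 df (r rho0) * (a0 - S z)) by (apply Rmult_lt_0_compat; lra). lra. }
    assert (0 < T z * (df z - df (r z) * S z) * / f z)
      by (apply Rmult_lt_0_compat; [apply Rmult_lt_0_compat|]; lra).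
    unfold Rdiv. lra.
Qed.

(** Lower bound [alpha0 tau(rho0) <= r'(rho0)]: otherwise [s <= s(y) < alpha0] on some
    [(0,y]], so [r' <= r'(y)], [tau <= C], [tau >= tau(y)] and [tau' <= - K / x]:
    [tau] blows up. *)
Lemma lower_slope_bound : a0 * T rho0 <= dr rho0.
Proof.
  destruct (Rle_or_lt (a0 * T rho0) (dr rho0)) as [|Hlt]; auto. exfalso.
  destruct window_constants as [HB0r [HB0p [HB1r HB1p]]].
  destruct (stretch_below_to_the_left a0 Hlt) as [y [Hy HSy]].
  assert (Hstay := below_alpha0_persists y Hy HSy).
  assert (Hbelow : forall z, 0 < z <= y -> S z < a0)
    by (intros z Hz; specialize (Hstay z Hz); lra).
  assert (Hdry : 0 < dr y) by (apply Hdrpos; lra).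
  assert (Hdr : forall x, 0 < x <= y -> dr x <= dr y).
  { intros x Hx. apply (nondecreasing_of_deriv dr d2r x y); try lra.
    - apply (derivable_cont_in _ d2r). intros; apply Hr2; lra.
    - intros; apply Hr2; lra.
    - intros z Hz. left. apply (below_alpha0 z); try lra. apply Hbelow; lra. }
  assert (HTup := tau_upper_of_slope y (dr y) ltac:(lra) ltac:(lra) Hdr).
  assert (HTy : 0 < T y) by (apply tau_pos; lra).
  set (K := T y * (B0r * (a0 - S y)) / B1p).
  assert (HK : 0 < K) by (unfold K; apply Rdiv_lt_0_compat; [apply Rmult_lt_0_compat|]; nra).
  apply (log_blowup (fun x => - T x) (fun x => - (T x * (df (r x) * S x - df x) / f x))
           y K (- (B1r * dr y / B0p))); try lra.
  - intros x Hx. apply derivable_pt_lim_opp, tau_deriv; lra.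
  - intros x Hx. assert (Hsx := Hstay x Hx).
    destruct (below_alpha0 x ltac:(lra) ltac:(lra) (Hbelow x Hx)) as [HE _].
    assert (HTx := below_alpha0_tau_nonincreasing y Hy Hbelow x Hx).
    replace (- (T x * (df (r x) * S x - df x) / f x))
      with (T x * (df x - df (r x) * S x) / f x) by (field; apply Rgt_not_eq, Hfpos; lra).
    apply (quotient_lower_bound _ _ B1p); try lra.
    + apply Hfpos; lra.
    + apply (Hflin rho0 x); lra.
    + replace (K * B1p) with (T y * (B0r * (a0 - S y))) by (unfold K; field; lra).
      apply Rmult_le_compat; nra.
  - intros x Hx. specialize (HTup x Hx). lra.
Qed.

End AtRadius.
End Equilibrium.
Theorem theorem4p2
  (n : nat) (Hn : (2 <= n)%nat)
  (* kappa continuous on [0,oo) *)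
  (kappa : R -> R)
  (Hkappa : forall x, 0 <= x -> limit1_in kappa (fun y => 0 <= y) (kappa x) x)
  (* f solves f'' + kappa f = 0, f(0) = 0, f'(0) = 1 on [0,oo); df = f' *)
  (f df : R -> R)
  (Hf0 : f 0 = 0) (Hdf0 : df 0 = 1)
  (Hfc0 : limit1_in f (fun y => 0 <= y) (f 0) 0)
  (Hdfc0 : limit1_in df (fun y => 0 <= y) (df 0) 0)
  (Hf' : forall x, 0 < x -> derivable_pt_lim f x (df x))
  (Hf'' : forall x, 0 < x -> derivable_pt_lim df x (- kappa x * f x))
  (* lambda > 0 and mu_+(max(lambda,1)) <= 1 *)
  (lam : R) (Hlam : 0 < lam)
  (Hmu : exists pr : Riemann_integrable (fun s => s * Rmax (kappa s) 0) 0 (Rmax lam 1),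
           RiemannInt pr <= 1)
  (* (A1) h is C^2 and strictly convex on (0,oo) *)
  (h dh d2h : R -> R)
  (Hh1 : forall x, 0 < x -> derivable_pt_lim h x (dh x))
  (Hh2 : forall x, 0 < x -> derivable_pt_lim dh x (d2h x))
  (Hh2c : forall x, 0 < x -> continuity_pt d2h x)
  (Hhconv : strictly_convex_pos h)
  (* (A4) phi : (0,oo) -> (0,oo) is C^2 and convex *)
  (phi dphi d2phi : R -> R)
  (Hphipos : forall x, 0 < x -> 0 < phi x)
  (Hphi1 : forall x, 0 < x -> derivable_pt_lim phi x (dphi x))
  (Hphi2 : forall x, 0 < x -> derivable_pt_lim dphi x (d2phi x))
  (Hphi2c : forall x, 0 < x -> continuity_pt d2phi x)
  (Hphiconv : convex_pos phi)
  (* (A5) v |-> v phi'(v) is increasing *)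
  (HA5 : forall u v, 0 < u -> u < v -> u * dphi u < v * dphi v)
  (* (A6) *)
  (t0 : R) (Ht0 : 0 <= t0)
  (Ht0phi : limit1_in dphi (fun v => 0 < v) 0 t0)
  (q1 dq1 q0 dq0 q1inv q0inv : R -> R)
  (Hq1 : forall s, 1 <= s ->
     is_lub (fun y => exists v, t0 < v /\ y = dphi v / dphi (s * v)) (q1 s))
  (Hq0 : forall s, 0 < s -> s <= 1 ->
     is_glb (fun y => exists v, t0 / s < v /\ y = dphi v / dphi (s * v)) (q0 s))
  (* q1 in C^1[1,oo) with q1' < 0 *)
  (Hq1d : forall s, 1 < s -> derivable_pt_lim q1 s (dq1 s))
  (Hq1d1 : limit1_in (fun s => (q1 s - q1 1) / (s - 1)) (fun s => 1 < s) (dq1 1) 1)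
  (Hdq1c : forall s, 1 <= s -> limit1_in dq1 (fun y => 1 <= y) (dq1 s) s)
  (Hdq1neg : forall s, 1 <= s -> dq1 s < 0)
  (Hq1lim : forall eps, 0 < eps -> exists M, forall s, M < s -> 1 <= s -> Rabs (q1 s) < eps)
  (* q0 in C^1(0,1] with q0' < 0 *)
  (Hq0d : forall s, 0 < s < 1 -> derivable_pt_lim q0 s (dq0 s))
  (Hq0d1 : limit1_in (fun s => (q0 s - q0 1) / (s - 1)) (fun s => 0 < s < 1) (dq0 1) 1)
  (Hdq0c : forall s, 0 < s <= 1 -> limit1_in dq0 (fun y => 0 < y <= 1) (dq0 s) s)
  (Hdq0neg : forall s, 0 < s <= 1 -> dq0 s < 0)
  (Hq0lim : forall M, exists delta, 0 < delta /\
                forall s, 0 < s -> s < delta -> s <= 1 -> M < q0 s)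
  (* inverses q1^{-1} : (0,1] -> [1,oo), q0^{-1} : [1,oo) -> (0,1] *)
  (Hq1inv : forall y, 0 < y <= 1 -> 1 <= q1inv y /\ q1 (q1inv y) = y)
  (Hq0inv : forall y, 1 <= y -> (0 < q0inv y <= 1) /\ q0 (q0inv y) = y)
  (* r : a regular equilibrium solution with r(1) = lambda *)
  (r dr d2r : R -> R)
  (Hr1 : forall rho, 0 < rho < 1 -> derivable_pt_lim r rho (dr rho))
  (Hr1at1 : limit1_in (fun x => (r x - r 1) / (x - 1)) (fun x => 0 < x < 1) (dr 1) 1)
  (Hdrc : forall rho, 0 < rho <= 1 -> limit1_in dr (fun x => 0 < x <= 1) (dr rho) rho)
  (Hr2 : forall rho, 0 < rho < 1 -> derivable_pt_lim dr rho (d2r rho))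
  (Hdrpos : forall rho, 0 < rho <= 1 -> 0 < dr rho)
  (Hreg : limit1_in r (fun x => 0 < x) 0 0)
  (Hrlam : r 1 = lam)
  (Heq : forall rho, 0 < rho < 1 ->
     let tau := f (r rho) / f rho in
     f rho * (d2phi (dr rho) + d2h (dr rho * tau ^ (n - 1)) * tau ^ (2 * (n - 1)))
       * d2r rho
     = INR (n - 1) * (df (r rho) * dphi tau - df rho * dphi (dr rho))
       - INR (n - 1) * (df (r rho) * dr rho - df rho * tau)
           * d2h (dr rho * tau ^ (n - 1)) * dr rho * tau ^ (2 * n - 3)) :
  forall rho, 0 < rho <= 1 ->
    alpha0 df q0inv rho (r rho) * (f (r rho) / f rho) <= dr rho /\
    dr rho <= alpha1 df q1inv rho (r rho) * (f (r rho) / f rho).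
Proof.
  intros rho0 Hrho0.
  set (M := Rmax lam 1).
  assert (HM1 : 1 <= M) by apply Rmax_r.
  assert (HlamM : lam <= M) by apply Rmax_l.
  (* Step 1: [mu_+(M) <= 1] makes the Jacobi field increasing on [[0,M]]. *)
  assert (Hcf := cont_in_from_zero f df Hfc0 Hf').
  assert (Hcdf := cont_in_from_zero df _ Hdfc0 Hf'').
  assert (Hmass : mu kappa M <= 1)
    by (destruct Hmu as [pr Hpr]; rewrite (mu_riemann kappa M pr) by lra; exact Hpr).
  assert (Hdfpos := jacobi_derivative_pos kappa f df Hkappa Hf0 Hdf0 Hcf Hcdf Hf' Hf''
                      M ltac:(lra) Hmass).
  assert (Hfpos := jacobi_pos f df M Hf0 Hcf Hf' Hdfpos).
  assert (Hflin := jacobi_linear_bounds f df M Hf0 Hdf0 Hcf Hcdf Hf' Hdfpos).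
  assert (Hb0 := b0_bounds df M Hdf0 Hcdf Hdfpos).
  assert (Hb1 := b1_bounds df Hdf0 Hcdf).
  assert (Hrcont := profile_cont_in r dr Hr1 Hr1at1).
  assert (Hrmono := profile_nondecreasing r dr Hr1 Hr1at1 Hdrpos).
  assert (Hrange : forall x, 0 < x <= 1 -> 0 < r x <= M).
  { intros x Hx. split; [apply (profile_pos r dr Hr1 Hr1at1 Hdrpos Hreg); auto|].
    assert (r x <= r 1) by (apply Hrmono; lra). lra. }
  assert (Hd2phi : forall x, 0 < x -> 0 <= d2phi x)
    by (intros x Hx; apply (convex_second_deriv_nonneg phi dphi); auto).
  assert (Hd2h : forall x, 0 < x -> 0 <= d2h x)
    by (intros x Hx; apply (convex_second_deriv_nonneg h dh); auto;
        apply strictly_convex_convex; auto).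
  assert (Hsign := dphi_sign dphi t0 HA5 Ht0 Ht0phi).
  assert (Hq1dec := q1_decreasing q1 dq1 Hq1d Hq1d1 Hdq1neg).
  assert (Hq0dec := q0_decreasing q0 dq0 Hq0d Hq0d1 Hdq0neg).
  split.
  - exact (lower_slope_bound n Hn f df M HM1 Hfpos Hf' Hflin Hb0 Hb1 dphi d2phi d2h
             Hd2phi Hd2h t0 HA5 Hsign q0 q0inv Hq0 Hq0dec Hq0inv r dr d2r Hr1 Hr2 Hdrc
             Hdrpos Hreg Hrange Hrmono Hrcont Heq rho0 Hrho0).
  - exact (upper_slope_bound n Hn f df M HM1 Hfpos Hf' Hflin Hb0 Hb1 dphi d2phi d2h
             Hd2phi Hd2h t0 HA5 Hsign q1 q1inv Hq1 Hq1dec Hq1inv r dr d2r Hr1 Hr2 Hdrc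
             Hdrpos Hreg Hrange Hrmono Hrcont Heq rho0 Hrho0).
Qed.
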